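(* Let $n$ be a non-negative integer and $r,s\in\mathbb{C}\setminus\mathbb{Z}^{-}$ with $s\neq0$ and $r-s\notin\mathbb{Z}^{-}$. Then \[ \begin{aligned} &\sum_{k=0}^{n}\binom{n}{k}\frac{H_{n-k+r-s}}{(k+2)(k+s)\binom{n+r}{k+s}}-H_{n+r}\sum_{k=0}^{n}\binom{n}{k}\frac{1}{(k+2)(k+s)\binom{n+r}{k+s}}\\ &\quad=H_{r-s}\sum_{k=0}^{n}\binom{n}{k}\frac{(-1)^k}{(k+1)(k+2)(k+s)\binom{k+r}{k+s}}-\sum_{k=0}^{n}\binom{n}{k}\frac{(-1)^kH_{k+r}}{(k+1)(k+2)(k+s)\binom{k+r}{k+s}}. \end{aligned} \]
   Context: $\mathbb{Z}^{-}$ denotes the set of negative integers. For complex $z$ not a negative integer, $H_z=\psi(z+1)+\gamma$ ($\psi$ the digamma function, $\gamma$ Euler's constant). Binomial coefficients with complex entries: $\binom{x}{y}=\frac{\Gamma(x+1)}{\Gamma(y+1)\Gamma(x-y+1)}$. *)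

From Stdlib Require Import Reals Factorial Binomial ClassicalEpsilon.
From Coquelicot Require Import Coquelicot.
Open Scope R_scope.

Definition cexp (z : C) : C :=
  (exp (Re z) * cos (Im z), exp (Re z) * sin (Im z)).

Fixpoint cpoch (z : C) (n : nat) : C :=
  match n with
  | O => z
  | S m => Cmult (cpoch z m) (Cplus z (RtoC (INR (S m))))
  end.

Definition gamma_term (z : C) (n : nat) : C :=
  Cdiv (Cmult (RtoC (INR (fact n))) (cexp (Cmult z (RtoC (ln (INR n)))))) (cpoch z n).

(* Complex Gamma function, defined by Euler's limit formula
   Gamma z = lim_n n! n^z / (z (z+1) ... (z+n))   (z not in {0,-1,-2,...}) *)
Definition CGamma (z : C) : C :=
  epsilon (inhabits (RtoC 0))
    (fun l => filterlim (gamma_term z) eventually (locally l)).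

Definition CGamma' (z : C) : C :=
  epsilon (inhabits (RtoC 0))
    (fun d => is_derive (K := C_AbsRing) (V := C_NormedModule) CGamma z d).

Definition digamma (z : C) : C := Cdiv (CGamma' z) (CGamma z).

Definition euler_gamma : R :=
  real (Lim_seq (fun n => sum_f_R0 (fun k => / INR (S k)) n - ln (INR (S n)))).

(* harmonic number H_z = psi(z+1) + gamma *)
Definition Hc (z : C) : C := Cplus (digamma (Cplus z (RtoC 1))) (RtoC euler_gamma).

Definition Cbinom (x y : C) : C :=
  Cdiv (CGamma (Cplus x (RtoC 1)))
       (Cmult (CGamma (Cplus y (RtoC 1))) (CGamma (Cplus (Cminus x y) (RtoC 1)))).

Definition negint (z : C) : Prop := exists m : nat, z = RtoC (- INR (S m)).

Definition nbinom (n k : nat) : C := RtoC (Binomial.C n k).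

Fixpoint csum (n : nat) (f : nat -> C) : C :=
  match n with
  | O => f O
  | S m => Cplus (csum m f) (f (S m))
  end.

Definition cn (k : nat) : C := RtoC (INR k).
Definition sgn (k : nat) : C := RtoC ((-1) ^ k).

(** Write Euler's limit as
    [gamma_term z n = z^-1 * (prod_(i<n) a_i(z)) * exp(-z (ln(n+1) - ln n))] with
    [a_i(z) = exp(z l_i) (i+1)/(z+i+1)] and [l_i = ln(i+2) - ln(i+1)].  Uniformly for [z]
    away from the poles, [a_i(z) = 1 + O(1/i^2)] and likewise for [1/a_i(z)], so the product
    converges to a nonzero limit: [Gamma] exists and does not vanish.  Moreover
    [a_i(z+h) = a_i(z) (1 + h c_i(z) + O(h^2/i^2))] with [c_i = O(1/i^2)], which makes
    [Gamma] complex differentiable, and [gamma_term (z+1) n / gamma_term z n -> z] gives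
    [Gamma(z+1) = z Gamma(z)].

    With [Gamma(x+k) = (x)_k Gamma(x)] both sides of the undifferentiated identity
    [sum_k C(n,k)/((k+2)(k+s) C(n+rho,k+s)) =
     sum_k C(n,k)(-1)^k/((k+1)(k+2)(k+s) C(k+rho,k+s))]
    become a common factor times Pochhammer sums; expanding
    [1/(k+2) = sum_j C(k,j) (-1)^j/((j+1)(j+2))] and applying Chu-Vandermonde turns one
    into the other.  The identity holds for all [rho] near [r], and the theorem is its
    derivative at [rho = r], since
    [d/drho 1/C(c+rho,b) = (psi(c+rho-b+1) - psi(c+rho+1))/C(c+rho,b)]. *)

From Stdlib Require Import Reals Lra Lia Psatz Factorial Binomial ClassicalEpsilon.
From Coquelicot Require Import Coquelicot.
Open Scope R_scope.

Definition clim (u : nat -> C) (l : C) :=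
  forall eps, 0 < eps -> exists N, forall n, (N <= n)%nat -> Cmod (Cminus (u n) l) < eps.

Lemma clim_filterlim u l : clim u l -> filterlim u eventually (locally l).
Proof.
  intros H. apply filterlim_locally. intros eps.
  destruct (H eps (cond_pos eps)) as [N HN]. exists N. intros n Hn.
  apply C_NormedModule_mixin_compat1. apply HN; auto.
Qed.

Lemma filterlim_clim u l : filterlim u eventually (locally l) -> clim u l.
Proof.
  intros H eps Heps.
  assert (Hp : 0 < eps / sqrt 2).
  { apply Rdiv_lt_0_compat; auto. apply sqrt_lt_R0; lra. }
  apply filterlim_locally with (eps := mkposreal _ Hp) in H.
  destruct H as [N HN]. exists N. intros n Hn.
  specialize (HN n Hn). apply C_NormedModule_mixin_compat2 in HN. simpl in HN.
  replace (sqrt 2 * (eps / sqrt 2)) with eps in HN. exact HN.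
  field. apply Rgt_not_eq, sqrt_lt_R0; lra.
Qed.

Lemma clim_unique u l1 l2 : clim u l1 -> clim u l2 -> l1 = l2.
Proof.
  intros H1 H2. apply clim_filterlim in H1. apply clim_filterlim in H2.
  exact (filterlim_locally_unique _ _ _ H1 H2).
Qed.

Lemma clim_ext u v l N : (forall n, (N <= n)%nat -> u n = v n) -> clim u l -> clim v l.
Proof.
  intros E H eps Heps. destruct (H eps Heps) as [M HM]. exists (max N M).
  intros n Hn. rewrite <- E by lia. apply HM; lia.
Qed.

Lemma clim_const c : clim (fun _ => c) c.
Proof. intros eps Heps. exists O. intros. replace (Cminus c c) with (RtoC 0) by ring. rewrite Cmod_0; lra. Qed.

Lemma clim_plus u v a b : clim u a -> clim v b -> clim (fun n => Cplus (u n) (v n)) (Cplus a b).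
Proof.
  intros Hu Hv eps Heps. destruct (Hu (eps/2)) as [N1 H1]. lra. destruct (Hv (eps/2)) as [N2 H2]. lra.
  exists (max N1 N2). intros n Hn. specialize (H1 n ltac:(lia)). specialize (H2 n ltac:(lia)).
  replace (Cminus (Cplus (u n) (v n)) (Cplus a b)) with (Cplus (Cminus (u n) a) (Cminus (v n) b)) by ring.
  eapply Rle_lt_trans. apply Cmod_triangle. lra.
Qed.

Lemma clim_mult u v a b : clim u a -> clim v b -> clim (fun n => Cmult (u n) (v n)) (Cmult a b).
Proof.
  intros Hu Hv eps Heps.
  set (K := Cmod a + Cmod b + 1). assert (0 < K) by (unfold K; pose proof (Cmod_ge_0 a); pose proof (Cmod_ge_0 b); lra).
  set (e := Rmin 1 (eps / (4 * K))). assert (0 < e) by (unfold e; apply Rmin_pos; [lra| apply Rdiv_lt_0_compat; lra]).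
  assert (e <= 1) by apply Rmin_l. assert (e <= eps / (4 * K)) by apply Rmin_r.
  destruct (Hu e H0) as [N1 HN1]. destruct (Hv e H0) as [N2 HN2].
  exists (max N1 N2). intros n Hn.
  specialize (HN1 n ltac:(lia)). specialize (HN2 n ltac:(lia)).
  replace (Cminus (Cmult (u n) (v n)) (Cmult a b)) with
    (Cplus (Cmult (Cminus (u n) a) (v n)) (Cmult a (Cminus (v n) b))) by ring.
  eapply Rle_lt_trans. apply Cmod_triangle. rewrite !Cmod_mult.
  assert (Cmod (v n) <= Cmod b + 1).
  { replace (v n) with (Cplus (Cminus (v n) b) b) by ring. eapply Rle_trans. apply Cmod_triangle. lra. }
  pose proof (Cmod_ge_0 (v n)). pose proof (Cmod_ge_0 a). pose proof (Cmod_ge_0 (Cminus (u n) a)).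
  pose proof (Cmod_ge_0 (Cminus (v n) b)).
  assert (Cmod (Cminus (u n) a) * Cmod (v n) <= e * K).
  { apply Rmult_le_compat; try lra. unfold K; lra. }
  assert (Cmod a * Cmod (Cminus (v n) b) <= K * e).
  { apply Rmult_le_compat; try lra. unfold K; pose proof (Cmod_ge_0 b); lra. }
  assert (e * K <= eps / 4).
  { apply Rle_trans with (eps / (4 * K) * K). apply Rmult_le_compat_r; lra. right; field; lra. }
  lra.
Qed.

Lemma clim_scal u a c : clim u a -> clim (fun n => Cmult c (u n)) (Cmult c a).
Proof. intros H. apply clim_mult; auto. apply clim_const. Qed.

Lemma clim_le u l v B N : clim u l -> (forall n, (N <= n)%nat -> Cmod (Cminus (u n) v) <= B) ->
  Cmod (Cminus l v) <= B.
Proof.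
  intros H Hb. apply Rnot_lt_le. intros Hlt.
  destruct (H (Cmod (Cminus l v) - B)) as [M HM]. lra.
  specialize (HM (max N M) ltac:(lia)). specialize (Hb (max N M) ltac:(lia)).
  pose proof (Cmod_triangle (Cminus l (u (max N M))) (Cminus (u (max N M)) v)).
  replace (Cplus (Cminus l (u (max N M))) (Cminus (u (max N M)) v)) with (Cminus l v) in H0 by ring.
  replace (Cminus l (u (max N M))) with (Copp (Cminus (u (max N M)) l)) in H0 by ring.
  rewrite Cmod_opp in H0. lra.
Qed.

Lemma div_succ_eventually_lt M eps : 0 <= M -> 0 < eps ->
  exists N, forall n, (N <= n)%nat -> M / (INR n + 1) < eps.
Proof.
  intros HM Heps.
  destruct (archimed_cor1 (eps / (M + 1))) as [N [HN HN0]].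
  { apply Rdiv_lt_0_compat; lra. }
  exists N. intros n Hn.
  assert (HNp : 0 < INR N) by (apply lt_0_INR; auto).
  assert (INR N <= INR n) by (apply le_INR; auto).
  apply Rle_lt_trans with (M * / INR N).
  - unfold Rdiv. apply Rmult_le_compat_l; auto. apply Rinv_le_contravar; lra.
  - apply Rle_lt_trans with ((M + 1) * / INR N).
    + apply Rmult_le_compat_r. left; apply Rinv_0_lt_compat; lra. lra.
    + apply Rmult_lt_reg_l with (/ (M + 1)). apply Rinv_0_lt_compat; lra.
      rewrite <- Rmult_assoc, Rinv_l by lra.
      replace (/ (M + 1) * eps) with (eps / (M + 1)) by (field; lra). lra.
Qed.

Lemma clim_of_rate (u : nat -> C) l M :
  (forall n, Cmod (Cminus (u n) l) <= M / (INR n + 1)) -> clim u l.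
Proof.
  intros H eps Heps.
  assert (HM : 0 <= M).
  { specialize (H O). simpl in H. pose proof (Cmod_ge_0 (Cminus (u O) l)).
    replace (M / (0 + 1)) with M in H by field. lra. }
  destruct (div_succ_eventually_lt M eps HM Heps) as [N HN].
  exists N. intros n Hn. eapply Rle_lt_trans. apply H. auto.
Qed.

Lemma clim_of_cauchy_rate (u : nat -> C) M : 0 <= M ->
  (forall n d, Cmod (Cminus (u (n + d)%nat) (u n)) <= M / (INR n + 1)) -> exists l, clim u l.
Proof.
  intros HM Hd.
  assert (Hex : exists y : C, filterlim u eventually (locally y)).
  { apply (filterlim_locally_cauchy (U := C_CompleteNormedModule)). intros eps.
    destruct (div_succ_eventually_lt M (eps / 2) HM) as [N HN].
    { pose proof (cond_pos eps); lra. }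
    exists (fun n => (N <= n)%nat). split.
    - exists N. auto.
    - intros n m Hn Hm. apply C_NormedModule_mixin_compat1.
      assert (B : forall k, (N <= k)%nat -> Cmod (Cminus (u k) (u N)) < eps / 2).
      { intros k Hk. replace k with (N + (k - N))%nat by lia.
        eapply Rle_lt_trans. apply Hd. apply HN; lia. }
      change (Cmod (Cminus (u m) (u n)) < eps).
      replace (Cminus (u m) (u n)) with (Cplus (Cminus (u m) (u N)) (Copp (Cminus (u n) (u N)))) by ring.
      eapply Rle_lt_trans. apply Cmod_triangle. rewrite Cmod_opp.
      pose proof (B n Hn). pose proof (B m Hm). lra. }
  destruct Hex as [y Hy]. exists y. apply filterlim_clim. exact Hy.
Qed.

Lemma MVT_from_0 (f df : R -> R) b : (forall x, is_derive f x (df x)) ->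
  exists c, Rabs c <= Rabs b /\ f b - f 0 = df c * b.
Proof.
  intros Hd. destruct (MVT_gen f 0 b df) as [c [Hc E]].
  - intros; auto.
  - intros. apply continuity_pt_filterlim.
    exact (ex_derive_continuous (V:=R_NormedModule) f x (ex_intro _ _ (Hd x))).
  - exists c. split. 2: rewrite E; ring.
    revert Hc. unfold Rmin, Rmax. destruct (Rle_dec 0 b); intros;
    unfold Rabs; repeat destruct Rcase_abs; lra.
Qed.

Lemma Rabs_sin_le b : Rabs (sin b) <= Rabs b.
Proof.
  destruct (MVT_from_0 sin cos b) as [c [Hc E]]. intros; apply is_derive_sin.
  rewrite sin_0 in E. replace (sin b) with (cos c * b) by lra.
  rewrite Rabs_mult. pose proof (COS_bound c).
  assert (Rabs (cos c) <= 1) by (apply Rabs_le; lra).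
  pose proof (Rabs_pos b). nra.
Qed.

Lemma Rabs_cos_sub_1_le b : Rabs (cos b - 1) <= b ^ 2.
Proof.
  destruct (MVT_from_0 cos (fun x => - sin x) b) as [c [Hc E]]. intros; apply is_derive_cos.
  rewrite cos_0 in E. rewrite E, Rabs_mult, Rabs_Ropp.
  pose proof (Rabs_sin_le c). pose proof (Rabs_pos b). pose proof (Rabs_pos c).
  replace (b^2) with (Rabs b * Rabs b). nra.
  rewrite <- Rabs_mult. rewrite Rabs_right. ring. nra.
Qed.

Lemma Rabs_sin_sub_le b : Rabs (sin b - b) <= Rabs b ^ 3.
Proof.
  destruct (MVT_from_0 (fun x => sin x - x) (fun x => cos x - 1) b) as [c [Hc E]].
  { intros. auto_derive; auto. ring. }
  rewrite sin_0 in E. replace (sin b - b) with ((cos c - 1) * b) by lra.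
  rewrite Rabs_mult. pose proof (Rabs_cos_sub_1_le c). pose proof (Rabs_pos b). pose proof (Rabs_pos c).
  assert (c ^ 2 <= Rabs b ^ 2). { rewrite <- (pow2_abs c). nra. }
  nra.
Qed.

Lemma exp_le_compat x y : x <= y -> exp x <= exp y.
Proof. intros H. destruct (Req_dec x y). subst; lra. apply Rlt_le, exp_increasing. lra. Qed.

Lemma Rabs_exp_sub_1_le a : Rabs (exp a - 1) <= Rabs a * exp (Rabs a).
Proof.
  destruct (MVT_from_0 exp exp a) as [c [Hc E]]. intros; apply is_derive_exp.
  rewrite exp_0 in E. rewrite E, Rabs_mult, Rmult_comm.
  rewrite (Rabs_right (exp c)) by (apply Rle_ge, Rlt_le, exp_pos).
  apply Rmult_le_compat_l. apply Rabs_pos. apply exp_le_compat.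
  apply Rle_trans with (Rabs c). apply Rle_abs. auto.
Qed.

Lemma Rabs_exp_sub_1_sub_le a : Rabs (exp a - 1 - a) <= a ^ 2 * exp (Rabs a).
Proof.
  destruct (MVT_from_0 (fun x => exp x - 1 - x) (fun x => exp x - 1) a) as [c [Hc E]].
  { intros. auto_derive; auto. ring. }
  rewrite exp_0 in E. replace (exp a - 1 - a) with ((exp c - 1) * a) by lra.
  rewrite Rabs_mult. pose proof (Rabs_exp_sub_1_le c).
  assert (exp (Rabs c) <= exp (Rabs a)) by (apply exp_le_compat; auto).
  pose proof (Rabs_pos c). pose proof (Rabs_pos a). pose proof (exp_pos (Rabs c)).
  rewrite <- (pow2_abs a).
  apply Rle_trans with (Rabs c * exp (Rabs c) * Rabs a). nra.
  assert (Rabs c * exp (Rabs c) <= Rabs a * exp (Rabs a)) by (apply Rmult_le_compat; lra).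
  nra.
Qed.

Lemma cexp_add u v : cexp (Cplus u v) = Cmult (cexp u) (cexp v).
Proof.
  destruct u as [a b], v as [c d]. unfold cexp, Cplus, Cmult; simpl.
  rewrite exp_plus, cos_plus, sin_plus. f_equal; ring.
Qed.

Lemma cexp_0 : cexp (RtoC 0) = RtoC 1.
Proof. unfold cexp; simpl. rewrite exp_0, cos_0, sin_0. unfold RtoC. f_equal; ring. Qed.

Lemma cexp_RtoC x : cexp (RtoC x) = RtoC (exp x).
Proof. unfold cexp; simpl. rewrite cos_0, sin_0. unfold RtoC. f_equal; ring. Qed.

Lemma Cmod_pair_le (x y : R) : Cmod (x, y) <= Rabs x + Rabs y.
Proof.
  unfold Cmod; cbn [fst snd]. rewrite <- (sqrt_Rsqr (Rabs x + Rabs y)).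
  2: pose proof (Rabs_pos x); pose proof (Rabs_pos y); lra.
  apply sqrt_le_1_alt. unfold Rsqr. rewrite <- (pow2_abs x), <- (pow2_abs y).
  pose proof (Rabs_pos x); pose proof (Rabs_pos y); nra.
Qed.

Lemma Rabs_snd_le_Cmod w : Rabs (snd w) <= Cmod w.
Proof.
  destruct w as [a b]. unfold Cmod; cbn [fst snd]. rewrite <- sqrt_Rsqr_abs. apply sqrt_le_1_alt.
  unfold Rsqr. nra.
Qed.

Lemma Cmod_cexp_sub_1_sub_le w :
  Cmod (Cminus (Cminus (cexp w) (RtoC 1)) w) <= 3 * Cmod w ^ 2 * exp (Cmod w).
Proof.
  pose proof (re_le_Cmod w) as Ha. pose proof (Rabs_snd_le_Cmod w) as Hb. pose proof (Cmod2_alt w) as Hs.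
  pose proof (Cmod_ge_0 w) as H0.
  destruct w as [a b]. unfold Re, Im in Ha, Hs. cbn [fst snd] in Ha, Hb, Hs. set (m := Cmod (a, b)) in *.
  unfold cexp, Cminus, Cplus, Copp, RtoC, Re, Im; cbn [fst snd].
  eapply Rle_trans. apply Cmod_pair_le.
  assert (Em : exp (Rabs a) <= exp m) by (apply exp_le_compat; auto).
  pose proof (exp_pos (Rabs a)). pose proof (exp_pos m).
  assert (Hre : Rabs (exp a * cos b + - (1) + - a) <= m ^ 2 * exp m).
  { replace (exp a * cos b + - (1) + - a) with ((exp a - 1 - a) + exp a * (cos b - 1)) by ring.
    eapply Rle_trans. apply Rabs_triang. rewrite Rabs_mult.
    pose proof (Rabs_exp_sub_1_sub_le a). pose proof (Rabs_cos_sub_1_le b).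
    assert (exp a <= exp (Rabs a)) by (apply exp_le_compat, Rle_abs).
    rewrite (Rabs_right (exp a)) by (apply Rle_ge, Rlt_le, exp_pos).
    pose proof (exp_pos a).
    assert (a ^ 2 * exp (Rabs a) <= a^2 * exp m) by (apply Rmult_le_compat_l; nra).
    assert (exp a * Rabs (cos b - 1) <= exp m * b ^ 2).
    { apply Rmult_le_compat; try lra. apply Rabs_pos. }
    rewrite Hs. nra. }
  assert (Him : Rabs (exp a * sin b + - (0) + - b) <= 2 * m ^ 2 * exp m).
  { replace (exp a * sin b + - (0) + - b) with ((exp a - 1) * sin b + (sin b - b)) by ring.
    eapply Rle_trans. apply Rabs_triang. rewrite Rabs_mult.
    pose proof (Rabs_exp_sub_1_le a) as Hea. pose proof (Rabs_sin_sub_le b). pose proof (Rabs_sin_le b).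
    pose proof (Rabs_pos a). pose proof (Rabs_pos b). pose proof (Rabs_pos (sin b)).
    pose proof (Rabs_pos (exp a - 1)).
    assert (Rabs (exp a - 1) * Rabs (sin b) <= m * exp m * m).
    { apply Rmult_le_compat; try lra. eapply Rle_trans. apply Hea.
      apply Rmult_le_compat; lra. }
    assert (Rabs b ^ 3 <= m ^ 2 * m).
    { replace (Rabs b ^ 3) with (Rabs b * Rabs b * Rabs b) by ring.
      replace (m ^ 2 * m) with (m * m * m) by ring.
      apply Rmult_le_compat; try nra. }
    pose proof (exp_ineq1_le m). nra. }
  lra.
Qed.

Lemma Cmod_cexp_sub_1_le w : Cmod (Cminus (cexp w) (RtoC 1)) <= Cmod w * (1 + 3 * Cmod w * exp (Cmod w)).
Proof.
  replace (Cminus (cexp w) (RtoC 1)) with (Cplus (Cminus (Cminus (cexp w) (RtoC 1)) w) w) by ring.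
  eapply Rle_trans. apply Cmod_triangle. pose proof (Cmod_cexp_sub_1_sub_le w). nra.
Qed.

Fixpoint sumC (f : nat -> C) (n : nat) : C :=
  match n with O => RtoC 0 | S m => Cplus (sumC f m) (f m) end.
Fixpoint prodC (f : nat -> C) (n : nat) : C :=
  match n with O => RtoC 1 | S m => Cmult (prodC f m) (f m) end.
Fixpoint sumR (f : nat -> R) (n : nat) : R :=
  match n with O => 0 | S m => sumR f m + f m end.

Definition inv_sq (i : nat) : R := / (INR i + 1) ^ 2.

Lemma inv_sq_pos i : 0 < inv_sq i.
Proof. unfold inv_sq. apply Rinv_0_lt_compat. pose proof (pos_INR i). nra. Qed.

Lemma sumR_inv_sq_tail_le n d :
  sumR (fun i => inv_sq (n + i)) d <= 2 / (INR n + 1) - 2 / (INR (n + d) + 1).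
Proof.
  induction d.
  - simpl. rewrite Nat.add_0_r. lra.
  - simpl sumR. replace (n + S d)%nat with (S (n + d)) by lia.
    rewrite S_INR. assert (inv_sq (n + d) = / (INR (n + d) + 1) ^ 2) by reflexivity.
    set (k := INR (n + d)) in *. assert (0 <= k) by apply pos_INR.
    assert (/ (k + 1) ^ 2 <= 2 / (k + 1) - 2 / (k + 1 + 1)).
    { replace (2 / (k + 1) - 2 / (k + 1 + 1)) with (2 * (k + 1) / ((k + 1) ^ 2 * (k + 2))) by (field; lra).
      replace (/ (k + 1) ^ 2) with ((k + 2) / ((k + 1) ^ 2 * (k + 2))) by (field; lra).
      unfold Rdiv. apply Rmult_le_compat_r. left; apply Rinv_0_lt_compat; nra. lra. }
    unfold k in *. lra.
Qed.

Lemma sumR_inv_sq_tail_le_div n d : sumR (fun i => inv_sq (n + i)) d <= 2 / (INR n + 1).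
Proof.
  pose proof (sumR_inv_sq_tail_le n d).
  assert (0 < 2 / (INR (n + d) + 1)) by (apply Rdiv_lt_0_compat; pose proof (pos_INR (n + d)); lra).
  lra.
Qed.

Lemma sumR_inv_sq_le n : sumR inv_sq n <= 2.
Proof.
  pose proof (sumR_inv_sq_tail_le_div 0 n) as H.
  replace (2 / (INR 0 + 1)) with 2 in H by (simpl; field). exact H.
Qed.

Definition prod_sub_1_const (K : R) := exp (2 * K) * K * 2.

Section InfiniteProduct.

Variables (x : nat -> C) (A : R).
Hypothesis A_ge0 : 0 <= A.
Hypothesis x_le : forall i, Cmod (x i) <= A * inv_sq i.

Let p n := prodC (fun i => Cplus (RtoC 1) (x i)) n.

Lemma Cmod_prod_le n : Cmod (p n) <= exp (2 * A).
Proof.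
  assert (Hexp : Cmod (p n) <= exp (A * sumR inv_sq n)).
  { induction n.
    - unfold p; simpl. rewrite Rmult_0_r, exp_0, Cmod_1. lra.
    - unfold p in *. simpl prodC. simpl sumR. rewrite Cmod_mult.
      rewrite Rmult_plus_distr_l, exp_plus.
      apply Rmult_le_compat; try apply Cmod_ge_0; auto.
      eapply Rle_trans. apply Cmod_triangle. rewrite Cmod_1.
      eapply Rle_trans. 2: apply exp_ineq1_le. specialize (x_le n). lra. }
  eapply Rle_trans. apply Hexp. apply exp_le_compat.
  pose proof (sumR_inv_sq_le n). nra.
Qed.

Lemma Cmod_prod_increment_le n d :
  Cmod (Cminus (p (n + d)%nat) (p n)) <= exp (2 * A) * A * (2 / (INR n + 1)).
Proof.
  enough (Cmod (Cminus (p (n + d)%nat) (p n)) <= exp (2 * A) * A * sumR (fun i => inv_sq (n + i)) d).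
  { eapply Rle_trans. apply H. pose proof (sumR_inv_sq_tail_le_div n d).
    pose proof (exp_pos (2 * A)). apply Rmult_le_compat_l. nra. lra. }
  induction d.
  - rewrite Nat.add_0_r. replace (Cminus (p n) (p n)) with (RtoC 0) by ring.
    rewrite Cmod_0. simpl. lra.
  - replace (n + S d)%nat with (S (n + d)) by lia. unfold p at 1. simpl prodC. fold (p (n + d)%nat).
    replace (Cminus (Cmult (p (n + d)%nat) (Cplus (RtoC 1) (x (n + d)%nat))) (p n))
      with (Cplus (Cminus (p (n + d)%nat) (p n)) (Cmult (p (n + d)%nat) (x (n + d)%nat))) by ring.
    eapply Rle_trans. apply Cmod_triangle. rewrite Cmod_mult. simpl sumR.
    pose proof (Cmod_prod_le (n + d)). pose proof (x_le (n + d)%nat).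
    assert (Cmod (p (n + d)%nat) * Cmod (x (n + d)%nat) <= exp (2 * A) * (A * inv_sq (n + d))).
    { apply Rmult_le_compat; auto; apply Cmod_ge_0. }
    lra.
Qed.

Lemma Cmod_prod_sub_1_le n : Cmod (Cminus (p n) (RtoC 1)) <= prod_sub_1_const A.
Proof.
  unfold prod_sub_1_const.
  pose proof (Cmod_prod_increment_le 0 n). simpl in H. unfold p in H at 2. simpl in H.
  replace (2 / (0 + 1)) with 2 in H by field. exact H.
Qed.

Lemma prod_converges : exists l, clim p l.
Proof.
  apply (clim_of_cauchy_rate _ (prod_sub_1_const A)); unfold prod_sub_1_const.
  - pose proof (exp_pos (2 * A)). nra.
  - intros n d. eapply Rle_trans. apply Cmod_prod_increment_le. right. unfold Rdiv. ring.
Qed.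

End InfiniteProduct.

Lemma sum_converges (c : nat -> C) K : 0 <= K -> (forall i, Cmod (c i) <= K * inv_sq i) ->
  exists S, clim (sumC c) S.
Proof.
  intros HK H. apply (clim_of_cauchy_rate _ (2 * K)). lra. intros n d.
  assert (Htail : Cmod (Cminus (sumC c (n + d)) (sumC c n)) <= K * sumR (fun i => inv_sq (n + i)) d).
  { induction d.
    - rewrite Nat.add_0_r. replace (Cminus (sumC c n) (sumC c n)) with (RtoC 0) by ring.
      rewrite Cmod_0; simpl; lra.
    - replace (n + S d)%nat with (S (n + d)) by lia. simpl sumC. simpl sumR.
      replace (Cminus (Cplus (sumC c (n + d)) (c (n + d)%nat)) (sumC c n)) with
        (Cplus (Cminus (sumC c (n + d)) (sumC c n)) (c (n + d)%nat)) by ring.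
      eapply Rle_trans. apply Cmod_triangle. specialize (H (n + d)%nat). lra. }
  eapply Rle_trans. apply Htail. pose proof (sumR_inv_sq_tail_le_div n d).
  replace (2 * K / (INR n + 1)) with (K * (2 / (INR n + 1))) by (field; pose proof (pos_INR n); lra).
  apply Rmult_le_compat_l; lra.
Qed.

Section ProductLinearization.

Variables (x c : nat -> C) (h : C) (K1 K2 : R).
Hypothesis K1_ge0 : 0 <= K1.
Hypothesis K2_ge0 : 0 <= K2.
Hypothesis h_le1 : Cmod h <= 1.
Hypothesis c_le : forall i, Cmod (c i) <= K2 * inv_sq i.
Hypothesis x_linear : forall i, Cmod (Cminus (x i) (Cmult h (c i))) <= K1 * Cmod h ^ 2 * inv_sq i.

Let p n := prodC (fun i => Cplus (RtoC 1) (x i)) n.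
Let K0 := prod_sub_1_const (K1 + K2).

Lemma Cmod_perturbation_le i : Cmod (x i) <= ((K1 + K2) * Cmod h) * inv_sq i.
Proof.
  replace (x i) with (Cplus (Cminus (x i) (Cmult h (c i))) (Cmult h (c i))) by ring.
  eapply Rle_trans. apply Cmod_triangle. rewrite Cmod_mult.
  pose proof (x_linear i). pose proof (c_le i). pose proof (Cmod_ge_0 h). pose proof (inv_sq_pos i).
  assert (Cmod h * Cmod (c i) <= Cmod h * (K2 * inv_sq i)) by (apply Rmult_le_compat_l; auto).
  assert (K1 * Cmod h ^ 2 * inv_sq i <= K1 * Cmod h * inv_sq i).
  { apply Rmult_le_compat_r. lra. apply Rmult_le_compat_l. auto. simpl. nra. }
  nra.
Qed.

Lemma Cmod_perturbed_prod_sub_1_le n : Cmod (Cminus (p n) (RtoC 1)) <= K0 * Cmod h.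
Proof.
  pose proof (Cmod_ge_0 h).
  eapply Rle_trans. apply (Cmod_prod_sub_1_le x ((K1 + K2) * Cmod h)). nra. apply Cmod_perturbation_le.
  unfold K0, prod_sub_1_const.
  assert (exp (2 * ((K1 + K2) * Cmod h)) <= exp (2 * (K1 + K2))) by (apply exp_le_compat; nra).
  assert (0 <= (K1 + K2) * Cmod h) by nra.
  replace (exp (2 * (K1 + K2)) * (K1 + K2) * 2 * Cmod h) with (exp (2 * (K1 + K2)) * ((K1 + K2) * Cmod h) * 2) by ring.
  apply Rmult_le_compat_r. lra. apply Rmult_le_compat_r; lra.
Qed.

Lemma Cmod_prod_linearization_le n :
  Cmod (Cminus (Cminus (p n) (RtoC 1)) (Cmult h (sumC c n))) <= 2 * (K0 * (K1 + K2) + K1) * Cmod h ^ 2.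
Proof.
  assert (HK0 : 0 <= K0) by (unfold K0, prod_sub_1_const; pose proof (exp_pos (2 * (K1 + K2))); nra).
  enough (Cmod (Cminus (Cminus (p n) (RtoC 1)) (Cmult h (sumC c n)))
            <= (K0 * (K1 + K2) + K1) * Cmod h ^ 2 * sumR inv_sq n).
  { eapply Rle_trans. apply H. pose proof (sumR_inv_sq_le n).
    assert (0 <= (K0 * (K1 + K2) + K1) * Cmod h ^ 2).
    { apply Rmult_le_pos. nra. pose proof (Cmod_ge_0 h); nra. }
    nra. }
  induction n.
  - unfold p; simpl. replace (Cminus (Cminus (RtoC 1) (RtoC 1)) (Cmult h (RtoC 0))) with (RtoC 0) by ring.
    rewrite Cmod_0. lra.
  - unfold p in *. simpl prodC. simpl sumC. simpl sumR.
    set (P := prodC (fun i => Cplus (RtoC 1) (x i)) n) in *.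
    replace (Cminus (Cminus (Cmult P (Cplus (RtoC 1) (x n))) (RtoC 1)) (Cmult h (Cplus (sumC c n) (c n))))
      with (Cplus (Cminus (Cminus P (RtoC 1)) (Cmult h (sumC c n)))
             (Cplus (Cmult (Cminus P (RtoC 1)) (x n)) (Cminus (x n) (Cmult h (c n))))) by ring.
    eapply Rle_trans. apply Cmod_triangle. eapply Rle_trans. apply Rplus_le_compat_l. apply Cmod_triangle.
    rewrite Cmod_mult. pose proof (Cmod_perturbed_prod_sub_1_le n) as H1. fold P in H1.
    pose proof (Cmod_perturbation_le n) as H2.
    pose proof (x_linear n) as H3. pose proof (Cmod_ge_0 h). pose proof (inv_sq_pos n).
    pose proof (Cmod_ge_0 (Cminus P (RtoC 1))). pose proof (Cmod_ge_0 (x n)).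
    assert (Cmod (Cminus P (RtoC 1)) * Cmod (x n) <= (K0 * Cmod h) * ((K1 + K2) * Cmod h * inv_sq n)).
    { apply Rmult_le_compat; auto. }
    replace ((K0 * (K1 + K2) + K1) * Cmod h ^ 2 * (sumR inv_sq n + inv_sq n)) with
      ((K0 * (K1 + K2) + K1) * Cmod h ^ 2 * sumR inv_sq n + (K0 * Cmod h) * ((K1 + K2) * Cmod h * inv_sq n)
       + K1 * Cmod h ^ 2 * inv_sq n) by ring.
    lra.
Qed.

Lemma prod_limit_linearization B S : clim p B -> clim (sumC c) S ->
  Cmod (Cminus B (RtoC 1)) <= K0 * Cmod h /\
  Cmod (Cminus (Cminus B (RtoC 1)) (Cmult h S)) <= 2 * (K0 * (K1 + K2) + K1) * Cmod h ^ 2.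
Proof.
  intros HB HS. split.
  - apply (clim_le _ _ _ _ O HB). intros n _. apply Cmod_perturbed_prod_sub_1_le.
  - replace (Cminus (Cminus B (RtoC 1)) (Cmult h S)) with (Cminus (Cplus B (Cmult (Copp h) S)) (RtoC 1)) by ring.
    apply (clim_le (fun n => Cplus (p n) (Cmult (Copp h) (sumC c n))) _ _ _ O).
    + apply clim_plus; auto. apply clim_scal; auto.
    + intros n _. eapply Rle_trans. 2: apply (Cmod_prod_linearization_le n). right. f_equal. ring.
Qed.

End ProductLinearization.

Lemma is_derive_of_quadratic_remainder (f : C -> C) x l :
  (exists d K, 0 < d /\ forall h, Cmod h < d ->
     Cmod (Cminus (Cminus (f (Cplus x h)) (f x)) (Cmult h l)) <= K * Cmod h ^ 2) ->
  is_derive f x l.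
Proof.
  intros [d [K [Hd H]]]. split. apply is_linear_scal_l.
  intros x0 Hx0.
  apply (is_filter_lim_locally_unique (K:=C_AbsRing) (V:=AbsRing_NormedModule C_AbsRing)) in Hx0. subst x0.
  intros eps. set (K' := Rabs K + 1).
  assert (HK' : 0 < K') by (unfold K'; pose proof (Rabs_pos K); lra).
  set (r := Rmin d (eps / K')).
  assert (Hr : 0 < r) by (apply Rmin_pos; auto; apply Rdiv_lt_0_compat; [apply cond_pos|auto]).
  exists (mkposreal r Hr). intros y Hy.
  assert (Hy' : Cmod (Cminus y x) < r) by exact Hy. clear Hy. rename Hy' into Hy.
  change (Cmod (Cminus (Cminus (f y) (f x)) (Cmult (Cminus y x) l)) <= eps * Cmod (Cminus y x)).
  set (h := Cminus y x) in *. replace y with (Cplus x h) by (unfold h; ring).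
  assert (Cmod h < d) by (eapply Rlt_le_trans; [apply Hy| apply Rmin_l]).
  assert (Cmod h <= eps / K') by (left; eapply Rlt_le_trans; [apply Hy| apply Rmin_r]).
  eapply Rle_trans. apply H; auto.
  pose proof (Cmod_ge_0 h). assert (K <= K') by (unfold K'; pose proof (Rle_abs K); lra).
  assert (K' * Cmod h <= eps).
  { apply Rmult_le_reg_l with (/ K'). apply Rinv_0_lt_compat; auto.
    rewrite <- Rmult_assoc, Rinv_l by lra. replace (/ K' * eps) with (eps / K') by (unfold Rdiv; ring). lra. }
  replace (K * Cmod h ^ 2) with ((K * Cmod h) * Cmod h) by ring.
  apply Rmult_le_compat_r. auto. nra.
Qed.

Definition nonpole (z : C) := forall j : nat, Cplus z (RtoC (INR j)) <> RtoC 0.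

Lemma Cmod_INR j : Cmod (RtoC (INR j)) = INR j.
Proof. rewrite Cmod_R. apply Rabs_right. apply Rle_ge, pos_INR. Qed.

Lemma Cmod_plus_ge a b : Cmod a - Cmod b <= Cmod (Cplus a b).
Proof.
  pose proof (Cmod_triangle (Cplus a b) (Copp b)). rewrite Cmod_opp in H.
  replace (Cplus (Cplus a b) (Copp b)) with a in H by ring. lra.
Qed.

Lemma RtoC_neq_0 x : x <> 0 -> RtoC x <> RtoC 0.
Proof. intros H E. apply H. injection E. auto. Qed.

Lemma Cinv_neq_0 z : z <> RtoC 0 -> Cinv z <> RtoC 0.
Proof. intros H E. apply C1_nz. rewrite <- (Cinv_r z H), E. ring. Qed.

Lemma INR_S_ge_1 i : 1 <= INR (S i).
Proof. rewrite S_INR. pose proof (pos_INR i). lra. Qed.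

Lemma Rdiv_le_compat N D a b : 0 <= N -> N <= a -> 0 < b -> b <= D -> N / D <= a / b.
Proof.
  intros. unfold Rdiv. apply Rmult_le_compat; try lra.
  left; apply Rinv_0_lt_compat; lra. apply Rinv_le_contravar; lra.
Qed.

Lemma nonpole_neq_0 z : nonpole z -> z <> RtoC 0.
Proof. intros H E. apply (H O). simpl. rewrite E. ring. Qed.

(* The points [z + j] stay away from [0] uniformly in [j]: finitely many are nonzero, the others have
   modulus at least [1]. *)
Lemma nonpole_dist_bound z : nonpole z -> exists m, 0 < m /\ forall j, m <= Cmod (Cplus z (RtoC (INR j))).
Proof.
  intros Hz.
  assert (Hfin : forall N, exists m, 0 < m /\ forall j, (j < N)%nat -> m <= Cmod (Cplus z (RtoC (INR j)))).
  { induction N as [|N [m [Hm H]]].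
    - exists 1. split. lra. intros; lia.
    - assert (0 < Cmod (Cplus z (RtoC (INR N)))) by (apply Cmod_gt_0, Hz).
      exists (Rmin m (Cmod (Cplus z (RtoC (INR N))))). split. apply Rmin_pos; auto.
      intros j Hj. destruct (Nat.eq_dec j N). subst. apply Rmin_r.
      eapply Rle_trans. apply Rmin_l. apply H; lia. }
  destruct (INR_unbounded (Cmod z + 1)) as [N HN].
  destruct (Hfin N) as [m [Hm H]].
  exists (Rmin m 1). split. apply Rmin_pos; lra.
  intros j. destruct (Nat.lt_ge_cases j N) as [Hl|Hl]. eapply Rle_trans. apply Rmin_l. auto.
  eapply Rle_trans. apply Rmin_r. pose proof (Cmod_plus_ge (RtoC (INR j)) z) as H0.
  rewrite Cmod_INR in H0. assert (INR N <= INR j) by (apply le_INR; lia).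
  replace (Cplus z (RtoC (INR j))) with (Cplus (RtoC (INR j)) z) by ring. lra.
Qed.

Lemma nonpole_near z m h : 0 < m -> (forall j, m <= Cmod (Cplus z (RtoC (INR j)))) -> Cmod h < m ->
  nonpole (Cplus z h).
Proof.
  intros Hm Hb Hh j E. pose proof (Cmod_plus_ge (Cplus z (RtoC (INR j))) h).
  replace (Cplus (Cplus z (RtoC (INR j))) h) with (Cplus (Cplus z h) (RtoC (INR j))) in H by ring.
  rewrite E, Cmod_0 in H. specialize (Hb j). lra.
Qed.

Lemma nonpole_add_nat z k : nonpole z -> nonpole (Cplus z (RtoC (INR k))).
Proof.
  intros H j. replace (Cplus (Cplus z (RtoC (INR k))) (RtoC (INR j))) with (Cplus z (RtoC (INR (k + j)))).
  apply H. rewrite plus_INR, RtoC_plus. ring.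
Qed.

Lemma nonpole_add_1 z : nonpole z -> nonpole (Cplus z (RtoC 1)).
Proof. intros H. replace (RtoC 1) with (RtoC (INR 1)) by reflexivity. apply nonpole_add_nat, H. Qed.

Definition ln_step (i : nat) : R := ln (INR (S (S i))) - ln (INR (S i)).

Lemma ln_1_plus_le y : 0 < 1 + y -> ln (1 + y) <= y.
Proof. intros H. rewrite <- (ln_exp y) at 2. apply ln_le; auto. apply exp_ineq1_le. Qed.

Lemma ln_step_bounds i :
  0 <= ln_step i /\ ln_step i <= / INR (S i) /\ / INR (S i) - ln_step i <= inv_sq i.
Proof.
  unfold ln_step. set (j := INR (S i)). assert (Hj : 1 <= j) by apply INR_S_ge_1.
  replace (INR (S (S i))) with (j + 1) by (unfold j; rewrite (S_INR (S i)); auto).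
  assert (E1 : ln (j + 1) - ln j = ln (1 + / j)).
  { rewrite <- ln_div by lra. f_equal. field. lra. }
  assert (E2 : ln (j + 1) - ln j = - ln (1 + - / (j + 1))).
  { rewrite <- ln_div by lra. rewrite <- ln_Rinv. f_equal. field. lra.
    replace (1 + - / (j + 1)) with (j / (j + 1)) by (field; lra). apply Rdiv_lt_0_compat; lra. }
  assert (U : ln (1 + / j) <= / j). { apply ln_1_plus_le. pose proof (Rinv_0_lt_compat j); lra. }
  assert (L : ln (1 + - / (j + 1)) <= - / (j + 1)).
  { apply ln_1_plus_le. assert (/ (j + 1) < 1). { rewrite <- Rinv_1. apply Rinv_lt_contravar; lra. } lra. }
  assert (inv_sq i = / j ^ 2) by (unfold inv_sq, j; rewrite S_INR; auto).
  assert (0 < / (j + 1)) by (apply Rinv_0_lt_compat; lra).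
  split; [|split]; try lra.
  assert (/ j - / (j + 1) <= / j ^ 2).
  { replace (/ j - / (j + 1)) with (/ (j * (j + 1))) by (field; lra).
    apply Rinv_le_contravar. nra. nra. }
  lra.
Qed.

Lemma Cmod_scaled_ln_step_sub_1_le i :
  Cmod (Cminus (Cmult (RtoC (INR (S i))) (RtoC (ln_step i))) (RtoC 1)) <= / INR (S i).
Proof.
  set (j := INR (S i)). assert (Hj : 1 <= j) by apply INR_S_ge_1.
  destruct (ln_step_bounds i) as [L1 [L2 L3]]. fold j in L2, L3.
  assert (Hiq : inv_sq i = / j ^ 2) by (unfold inv_sq, j; rewrite S_INR; reflexivity).
  rewrite <- RtoC_mult, <- RtoC_minus, Cmod_R, Rabs_left1.
  2: { assert (j * ln_step i <= j * / j) by (apply Rmult_le_compat_l; lra). rewrite Rinv_r in H by lra. lra. }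
  assert (j * (/ j - ln_step i) <= j * inv_sq i) by (apply Rmult_le_compat_l; lra).
  rewrite Hiq in H. replace (j * / j ^ 2) with (/ j) in H by (field; lra).
  replace (- (j * ln_step i - 1)) with (j * (/ j - ln_step i)) by (field; lra). lra.
Qed.

Lemma Cmod_cexp_sub_1_sub_le_scaled w a j : 1 <= j -> Cmod w <= a / j ->
  Cmod (Cminus (Cminus (cexp w) (RtoC 1)) w) <= 3 * (a ^ 2 / j ^ 2) * exp a.
Proof.
  intros Hj Hw. pose proof (Cmod_ge_0 w).
  assert (Ha : 0 <= a) by (assert (0 <= a / j) by lra; apply Rmult_le_reg_r with (/ j);
    [apply Rinv_0_lt_compat; lra | unfold Rdiv in *; lra]).
  assert (Hwa : Cmod w <= a).
  { eapply Rle_trans. apply Hw. unfold Rdiv.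
    assert (/ j <= 1) by (rewrite <- Rinv_1; apply Rinv_le_contravar; lra).
    pose proof (Rinv_0_lt_compat j). nra. }
  assert (Cmod w ^ 2 <= a ^ 2 / j ^ 2).
  { replace (a ^ 2 / j ^ 2) with ((a / j) ^ 2) by (field; lra). apply pow_incr. lra. }
  eapply Rle_trans. apply Cmod_cexp_sub_1_sub_le.
  apply Rmult_le_compat. nra. apply Rlt_le, exp_pos. nra. apply exp_le_compat; auto.
Qed.

Lemma Cmod_cexp_sub_1_le_scaled w a j : 1 <= j -> Cmod w <= a / j ->
  Cmod (Cminus (cexp w) (RtoC 1)) <= (a + 3 * a ^ 2 * exp a) / j.
Proof.
  intros Hj Hw. pose proof (Cmod_cexp_sub_1_sub_le_scaled w a j Hj Hw).
  assert (Ha : 0 <= a) by (pose proof (Cmod_ge_0 w); assert (0 <= a / j) by lra;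
    apply Rmult_le_reg_r with (/ j); [apply Rinv_0_lt_compat; lra | unfold Rdiv in *; lra]).
  replace (Cminus (cexp w) (RtoC 1)) with (Cplus (Cminus (Cminus (cexp w) (RtoC 1)) w) w) by ring.
  eapply Rle_trans. apply Cmod_triangle.
  assert (3 * (a ^ 2 / j ^ 2) * exp a <= 3 * a ^ 2 * exp a / j).
  { replace (3 * (a ^ 2 / j ^ 2) * exp a) with (3 * a ^ 2 * exp a / j * / j) by (field; lra).
    assert (/ j <= 1) by (rewrite <- Rinv_1; apply Rinv_le_contravar; lra).
    assert (0 <= 3 * a ^ 2 * exp a / j) by (apply Rdiv_le_0_compat; pose proof (exp_pos a); nra).
    nra. }
  replace ((a + 3 * a ^ 2 * exp a) / j) with (a / j + 3 * a ^ 2 * exp a / j) by (field; lra).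
  lra.
Qed.

(* [prod_(i<n) euler_factor z i] is [n! (n+1)^z / ((z+1)...(z+n))]. *)
Definition euler_factor (z : C) (i : nat) : C :=
  Cmult (cexp (Cmult z (RtoC (ln_step i)))) (Cdiv (RtoC (INR (S i))) (Cplus z (RtoC (INR (S i))))).
Definition euler_factor_inv (z : C) (i : nat) : C :=
  Cmult (cexp (Copp (Cmult z (RtoC (ln_step i))))) (Cdiv (Cplus z (RtoC (INR (S i)))) (RtoC (INR (S i)))).
Definition euler_factor_ratio (z h : C) (i : nat) : C :=
  Cmult (cexp (Cmult h (RtoC (ln_step i))))
        (Cdiv (Cplus z (RtoC (INR (S i)))) (Cplus (Cplus z h) (RtoC (INR (S i))))).
Definition euler_factor_log_deriv (z : C) (i : nat) : C :=
  Cminus (RtoC (ln_step i)) (Cinv (Cplus z (RtoC (INR (S i))))).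

Lemma euler_factor_shift z h i :
  Cplus z (RtoC (INR (S i))) <> RtoC 0 -> Cplus (Cplus z h) (RtoC (INR (S i))) <> RtoC 0 ->
  euler_factor (Cplus z h) i = Cmult (euler_factor z i) (euler_factor_ratio z h i).
Proof.
  intros H1 H2. unfold euler_factor, euler_factor_ratio.
  replace (Cmult (Cplus z h) (RtoC (ln_step i)))
    with (Cplus (Cmult z (RtoC (ln_step i))) (Cmult h (RtoC (ln_step i)))) by ring.
  rewrite cexp_add. field. auto.
Qed.

Lemma Cmod_mul_ln_step_le z i : Cmod (Cmult z (RtoC (ln_step i))) <= Cmod z / INR (S i).
Proof.
  rewrite Cmod_mult, Cmod_R. destruct (ln_step_bounds i) as [H1 [H2 H3]].
  rewrite Rabs_right by lra. apply Rmult_le_compat_l. apply Cmod_ge_0. auto.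
Qed.

Lemma euler_factor_inv_bound z :
  exists K, 0 <= K /\ forall i, Cmod (Cminus (euler_factor_inv z i) (RtoC 1)) <= K * inv_sq i.
Proof.
  set (a := Cmod z). set (e := exp a).
  assert (Ha : 0 <= a) by apply Cmod_ge_0. assert (He : 0 < e) by apply exp_pos.
  exists (3 * a ^ 2 * e + a * (a + 3 * a ^ 2 * e) + a). split.
  { pose proof (pow2_ge_0 a). assert (0 <= a ^ 2 * e) by nra. nra. }
  intros i.
  set (j := INR (S i)). set (w := Copp (Cmult z (RtoC (ln_step i)))).
  assert (Hj : 1 <= j) by apply INR_S_ge_1.
  assert (E : Cminus (euler_factor_inv z i) (RtoC 1) =
    Cdiv (Cplus (Cplus (Cmult (RtoC j) (Cminus (Cminus (cexp w) (RtoC 1)) w))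
                       (Cmult z (Cminus (cexp w) (RtoC 1))))
                (Copp (Cmult z (Cminus (Cmult (RtoC j) (RtoC (ln_step i))) (RtoC 1))))) (RtoC j)).
  { unfold euler_factor_inv. fold j w. unfold w. field. apply RtoC_neq_0; lra. }
  rewrite E, Cmod_div by (apply RtoC_neq_0; lra). rewrite Cmod_R, (Rabs_right j) by lra.
  assert (Hw : Cmod w <= a / j) by (unfold w; rewrite Cmod_opp; apply Cmod_mul_ln_step_le).
  assert (HX := Cmod_cexp_sub_1_sub_le_scaled w a j Hj Hw). fold e in HX.
  assert (HZ := Cmod_cexp_sub_1_le_scaled w a j Hj Hw). fold e in HZ.
  assert (HY := Cmod_scaled_ln_step_sub_1_le i). fold j in HY.
  pose proof (Cmod_ge_0 (Cminus (Cminus (cexp w) (RtoC 1)) w)).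
  pose proof (Cmod_ge_0 (Cminus (cexp w) (RtoC 1))).
  pose proof (Cmod_ge_0 (Cminus (Cmult (RtoC j) (RtoC (ln_step i))) (RtoC 1))).
  eapply Rle_trans. apply Rmult_le_compat_r. left; apply Rinv_0_lt_compat; lra.
  { eapply Rle_trans. apply Cmod_triangle. rewrite Cmod_opp.
    eapply Rle_trans. apply Rplus_le_compat_r. apply Cmod_triangle.
    rewrite !Cmod_mult, Cmod_R, Rabs_right by lra. fold a.
    apply Rplus_le_compat. apply Rplus_le_compat.
    - apply Rmult_le_compat_l. lra. exact HX.
    - apply Rmult_le_compat_l. lra. exact HZ.
    - apply Rmult_le_compat_l. lra. exact HY. }
  replace (inv_sq i) with (/ j ^ 2) by (unfold inv_sq, j; rewrite S_INR; reflexivity).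
  right. field. lra.
Qed.

Lemma euler_factor_ratio_sub_linear z h i :
  Cplus z (RtoC (INR (S i))) <> RtoC 0 ->
  Cplus (RtoC 1) (Cdiv h (Cplus z (RtoC (INR (S i))))) <> RtoC 0 ->
  let u := Cmult h (RtoC (ln_step i)) in
  let v := Cdiv h (Cplus z (RtoC (INR (S i)))) in
  Cminus (Cminus (euler_factor_ratio z h i) (RtoC 1)) (Cmult h (euler_factor_log_deriv z i)) =
  Cdiv (Cplus (Cminus (Cminus (cexp u) (RtoC 1)) u) (Cminus (Cmult v v) (Cmult u v))) (Cplus (RtoC 1) v).
Proof.
  intros Hq Hv u v. set (q := Cplus z (RtoC (INR (S i)))) in *.
  assert (Hqh : Cplus (Cplus z h) (RtoC (INR (S i))) <> RtoC 0).
  { intros E. apply Hv. replace (Cplus (RtoC 1) (Cdiv h q)) with (Cdiv (Cplus (Cplus z h) (RtoC (INR (S i)))) q).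
    rewrite E. field. auto. unfold q. field. auto. }
  unfold euler_factor_ratio, euler_factor_log_deriv. fold q. unfold v, u.
  replace (Cplus (Cplus z h) (RtoC (INR (S i)))) with (Cplus q h) in * by (unfold q; ring).
  field. repeat split; auto.
Qed.

Lemma Cmod_ratio_remainder_le u v a b c :
  Cmod u <= a -> Cmod v <= b -> Cmod v <= / 2 -> Cmod (Cminus (Cminus (cexp u) (RtoC 1)) u) <= c ->
  Cmod (Cdiv (Cplus (Cminus (Cminus (cexp u) (RtoC 1)) u) (Cminus (Cmult v v) (Cmult u v))) (Cplus (RtoC 1) v))
    <= 2 * (c + b * b + a * b).
Proof.
  intros Hu Hvb Hv Hc. pose proof (Cmod_ge_0 u). pose proof (Cmod_ge_0 v).
  assert (Hv1 : / 2 <= Cmod (Cplus (RtoC 1) v)) by (pose proof (Cmod_plus_ge (RtoC 1) v); rewrite Cmod_1 in H1; lra).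
  assert (Hv1n : Cplus (RtoC 1) v <> RtoC 0) by (intros E; rewrite E, Cmod_0 in Hv1; lra).
  rewrite Cmod_div by auto.
  replace (2 * (c + b * b + a * b)) with ((c + b * b + a * b) / / 2) by (field; lra).
  apply Rdiv_le_compat; auto. apply Cmod_ge_0. 2: lra.
  eapply Rle_trans. apply Cmod_triangle. unfold Cminus at 3. eapply Rle_trans. apply Rplus_le_compat_l, Cmod_triangle.
  rewrite Cmod_opp, !Cmod_mult.
  assert (Cmod v * Cmod v <= b * b) by (apply Rmult_le_compat; lra).
  assert (Cmod u * Cmod v <= a * b) by (apply Rmult_le_compat; lra).
  lra.
Qed.

Section EulerFactors.

Variables (z : C) (m : R).
Hypothesis m_pos : 0 < m.
Hypothesis m_le : forall j, m <= Cmod (Cplus z (RtoC (INR j))).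

Let rho := 1 + Cmod z / m.

Lemma rho_ge_1 : 1 <= rho.
Proof. unfold rho. pose proof (Cmod_ge_0 z). assert (0 <= Cmod z / m) by (apply Rdiv_le_0_compat; lra). lra. Qed.

Lemma Cmod_shift_ge i : INR i / rho <= Cmod (Cplus z (RtoC (INR i))).
Proof.
  pose proof (m_le i). pose proof (Cmod_triangle (Cplus z (RtoC (INR i))) (Copp z)).
  replace (Cplus (Cplus z (RtoC (INR i))) (Copp z)) with (RtoC (INR i)) in H0 by ring.
  rewrite Cmod_INR, Cmod_opp in H0. pose proof (Cmod_ge_0 z). pose proof rho_ge_1.
  assert (Cmod z <= Cmod z / m * Cmod (Cplus z (RtoC (INR i)))).
  { replace (Cmod z) with (Cmod z / m * m) at 1 by (field; lra). apply Rmult_le_compat_l; auto.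
    apply Rdiv_le_0_compat; lra. }
  apply Rmult_le_reg_r with rho. lra. unfold Rdiv. rewrite Rmult_assoc, Rinv_l by lra.
  unfold rho. lra.
Qed.

Lemma shift_neq_0 i : Cplus z (RtoC (INR i)) <> RtoC 0.
Proof. intros E. pose proof (m_le i). rewrite E, Cmod_0 in H. lra. Qed.

Lemma euler_factor_bound : exists K, 0 <= K /\ forall i, Cmod (Cminus (euler_factor z i) (RtoC 1)) <= K * inv_sq i.
Proof.
  set (T := 3 * Cmod z ^ 2 * exp (Cmod z) + Cmod z).
  pose proof (Cmod_ge_0 z). pose proof (exp_pos (Cmod z)). pose proof rho_ge_1.
  exists (T * rho). split.
  { apply Rmult_le_pos; [unfold T; pose proof (pow2_ge_0 (Cmod z)); nra | lra]. }
  intros i.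
  set (j := INR (S i)). set (q := Cplus z (RtoC j)). set (w := Cmult z (RtoC (ln_step i))).
  assert (Hj : 1 <= j) by apply INR_S_ge_1.
  assert (Hq : q <> RtoC 0) by apply shift_neq_0.
  assert (E : Cminus (euler_factor z i) (RtoC 1) =
    Cdiv (Cplus (Cmult (RtoC j) (Cminus (Cminus (cexp w) (RtoC 1)) w))
                (Cmult z (Cminus (Cmult (RtoC j) (RtoC (ln_step i))) (RtoC 1)))) q).
  { unfold euler_factor. fold j. unfold q, w. field. auto. }
  rewrite E, Cmod_div by auto.
  assert (HX := Cmod_cexp_sub_1_sub_le_scaled w (Cmod z) j Hj (Cmod_mul_ln_step_le z i)).
  assert (HY := Cmod_scaled_ln_step_sub_1_le i). fold j in HY.
  assert (HN : Cmod (Cplus (Cmult (RtoC j) (Cminus (Cminus (cexp w) (RtoC 1)) w))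
                (Cmult z (Cminus (Cmult (RtoC j) (RtoC (ln_step i))) (RtoC 1)))) <= T / j).
  { eapply Rle_trans. apply Cmod_triangle. rewrite !Cmod_mult, Cmod_R, Rabs_right by lra.
    pose proof (Cmod_ge_0 (Cminus (Cminus (cexp w) (RtoC 1)) w)).
    pose proof (Cmod_ge_0 (Cminus (Cmult (RtoC j) (RtoC (ln_step i))) (RtoC 1))).
    assert (j * Cmod (Cminus (Cminus (cexp w) (RtoC 1)) w) <= j * (3 * (Cmod z ^ 2 / j ^ 2) * exp (Cmod z)))
      by (apply Rmult_le_compat_l; lra).
    assert (Cmod z * Cmod (Cminus (Cmult (RtoC j) (RtoC (ln_step i))) (RtoC 1)) <= Cmod z * / j)
      by (apply Rmult_le_compat_l; lra).
    replace (T / j) with (j * (3 * (Cmod z ^ 2 / j ^ 2) * exp (Cmod z)) + Cmod z * / j) by (unfold T; field; lra).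
    lra. }
  eapply Rle_trans. apply (Rdiv_le_compat _ _ (T / j) (j / rho)).
  apply Cmod_ge_0. auto. apply Rdiv_lt_0_compat; lra. apply Cmod_shift_ge.
  right. replace (inv_sq i) with (/ j ^ 2) by (unfold inv_sq, j; rewrite S_INR; reflexivity).
  field. split; lra.
Qed.

Lemma euler_factor_mul_inv i : Cmult (euler_factor z i) (euler_factor_inv z i) = RtoC 1.
Proof.
  unfold euler_factor, euler_factor_inv. assert (Hq := shift_neq_0 (S i)).
  assert (RtoC (INR (S i)) <> RtoC 0) by (apply RtoC_neq_0; pose proof (INR_S_ge_1 i); lra).
  set (w := Cmult z (RtoC (ln_step i))).
  transitivity (Cmult (Cmult (cexp w) (cexp (Copp w)))
      (Cmult (Cdiv (RtoC (INR (S i))) (Cplus z (RtoC (INR (S i))))) (Cdiv (Cplus z (RtoC (INR (S i)))) (RtoC (INR (S i)))))).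
  { ring. }
  rewrite <- cexp_add. replace (Cplus w (Copp w)) with (RtoC 0) by ring.
  rewrite cexp_0. field. auto.
Qed.


Lemma euler_factor_log_deriv_bound :
  exists K, 0 <= K /\ forall i, Cmod (euler_factor_log_deriv z i) <= K * inv_sq i.
Proof.
  pose proof rho_ge_1. pose proof (Cmod_ge_0 z).
  exists (1 + Cmod z * rho). split. nra. intros i.
  set (j := INR (S i)). set (q := Cplus z (RtoC j)).
  assert (Hj : 1 <= j) by apply INR_S_ge_1.
  assert (Hq : q <> RtoC 0) by apply shift_neq_0.
  destruct (ln_step_bounds i) as [L1 [L2 L3]]. fold j in L2, L3.
  assert (Hiq : inv_sq i = / j ^ 2) by (unfold inv_sq, j; rewrite S_INR; reflexivity).
  assert (E : euler_factor_log_deriv z i = Cplus (RtoC (ln_step i - / j)) (Cdiv z (Cmult (RtoC j) q))).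
  { unfold euler_factor_log_deriv. fold j q. rewrite RtoC_minus, RtoC_inv by lra. unfold q.
    field. split; auto. apply RtoC_neq_0; lra. }
  rewrite E. eapply Rle_trans. apply Cmod_triangle.
  rewrite Cmod_R, Cmod_div, Cmod_mult, Cmod_R, (Rabs_right j)
    by (try apply Cmult_neq_0; auto; try apply RtoC_neq_0; lra).
  rewrite Rabs_left1 by lra.
  pose proof (Cmod_shift_ge (S i)) as Hql. fold j q in Hql.
  assert (Cmod z / (j * Cmod q) <= Cmod z * rho * inv_sq i).
  { rewrite Hiq. eapply Rle_trans. apply (Rdiv_le_compat (Cmod z) (j * Cmod q) (Cmod z) (j * (j / rho))).
    - apply Cmod_ge_0.
    - lra.
    - apply Rmult_lt_0_compat. lra. apply Rdiv_lt_0_compat; lra.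
    - apply Rmult_le_compat_l; lra.
    - right. field. lra. }
  lra.
Qed.

Lemma euler_factor_ratio_expansion : exists K, 0 <= K /\ forall h i, Cmod h <= 1 -> Cmod h <= m / 2 ->
  Cmod (Cminus (Cminus (euler_factor_ratio z h i) (RtoC 1)) (Cmult h (euler_factor_log_deriv z i)))
    <= K * Cmod h ^ 2 * inv_sq i.
Proof.
  pose proof rho_ge_1 as Hr. pose proof (exp_pos 1).
  exists (2 * (3 * exp 1 + rho * rho + rho)). split. nra.
  intros h i Hh1 Hh2.
  set (j := INR (S i)). set (q := Cplus z (RtoC j)).
  assert (Hj : 1 <= j) by apply INR_S_ge_1.
  assert (Hq : q <> RtoC 0) by apply shift_neq_0.
  pose proof (Cmod_ge_0 h) as Hh0.
  assert (Hv : Cmod (Cdiv h q) <= / 2).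
  { rewrite Cmod_div by auto. apply Rle_trans with ((m / 2) / m).
    apply Rdiv_le_compat; auto. apply m_le. right; field; lra. }
  assert (Hvr : Cmod (Cdiv h q) <= Cmod h * rho / j).
  { rewrite Cmod_div by auto. pose proof (Cmod_shift_ge (S i)) as Hql. fold j q in Hql.
    eapply Rle_trans. apply (Rdiv_le_compat _ _ (Cmod h) (j / rho)); auto.
    lra. apply Rdiv_lt_0_compat; lra. right. field. lra. }
  assert (Hv1 : Cplus (RtoC 1) (Cdiv h q) <> RtoC 0).
  { intros E. pose proof (Cmod_plus_ge (RtoC 1) (Cdiv h q)). rewrite E, Cmod_0, Cmod_1 in H0. lra. }
  rewrite (euler_factor_ratio_sub_linear z h i Hq Hv1). cbv zeta. fold j q.
  assert (Hu := Cmod_mul_ln_step_le h i). fold j in Hu.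
  assert (HE := Cmod_cexp_sub_1_sub_le_scaled _ _ j Hj Hu).
  assert (exp (Cmod h) <= exp 1) by (apply exp_le_compat; auto).
  assert (0 <= Cmod h ^ 2 / j ^ 2) by (apply Rdiv_le_0_compat; nra).
  eapply Rle_trans. apply (Cmod_ratio_remainder_le _ _ _ _ (3 * (Cmod h ^ 2 / j ^ 2) * exp 1) Hu Hvr Hv).
  { eapply Rle_trans. apply HE. apply Rmult_le_compat_l; lra. }
  replace (inv_sq i) with (/ j ^ 2) by (unfold inv_sq, j; rewrite S_INR; reflexivity).
  right. field. lra.
Qed.

End EulerFactors.

Lemma prodC_ext f g n : (forall i, f i = g i) -> prodC f n = prodC g n.
Proof. intros H; induction n; simpl; auto. rewrite IHn, H; auto. Qed.

Lemma prodC_mult f g n : Cmult (prodC f n) (prodC g n) = prodC (fun i => Cmult (f i) (g i)) n.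
Proof. induction n; simpl. ring. rewrite <- IHn. ring. Qed.

Lemma prodC_1 n : prodC (fun _ => RtoC 1) n = RtoC 1.
Proof. induction n; simpl; auto. rewrite IHn. ring. Qed.

Lemma prodC_neq_0 f n : (forall i, f i <> RtoC 0) -> prodC f n <> RtoC 0.
Proof. intros H; induction n; simpl. apply C1_nz. apply Cmult_neq_0; auto. Qed.

Lemma clim_prodC_1_plus f l : clim (prodC (fun i => Cplus (RtoC 1) (Cminus (f i) (RtoC 1)))) l ->
  clim (prodC f) l.
Proof. apply clim_ext with (N := O). intros n _. apply prodC_ext. intros; ring. Qed.

Definition poch (a : C) (k : nat) : C := prodC (fun i => Cplus a (RtoC (INR i))) k.

Lemma poch_S a k : poch a (S k) = Cmult (poch a k) (Cplus a (RtoC (INR k))).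
Proof. reflexivity. Qed.

Lemma poch_add a j i : poch a (j + i) = Cmult (poch a j) (poch (Cplus a (RtoC (INR j))) i).
Proof.
  induction i.
  - rewrite Nat.add_0_r. unfold poch at 3. simpl. ring.
  - replace (j + S i)%nat with (S (j + i)) by lia. rewrite !poch_S, IHi, plus_INR, RtoC_plus. ring.
Qed.

Lemma poch_S_shift a k : poch a (S k) = Cmult a (poch (Cplus a (RtoC 1)) k).
Proof. replace (S k) with (1 + k)%nat by lia. rewrite poch_add. f_equal. unfold poch; simpl. ring. Qed.

Lemma poch_neq_0 a k : nonpole a -> poch a k <> RtoC 0.
Proof. intros H. apply prodC_neq_0. intros i. apply H. Qed.

Lemma cpoch_poch z n : cpoch z n = poch z (S n).
Proof.
  induction n.
  - unfold poch; simpl. ring.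
  - simpl cpoch. rewrite IHn, (poch_S z (S n)). reflexivity.
Qed.

Lemma prodC_euler_factor z n : nonpole z ->
  prodC (euler_factor z) n =
  Cdiv (Cmult (cexp (Cmult z (RtoC (ln (INR (S n)))))) (RtoC (INR (fact n)))) (poch (Cplus z (RtoC 1)) n).
Proof.
  intros Hz. assert (Hz1 := nonpole_add_1 z Hz). induction n.
  - unfold poch; simpl. rewrite ln_1, Cmult_0_r, cexp_0. field.
  - simpl prodC. rewrite IHn. unfold euler_factor.
    assert (E : cexp (Cmult z (RtoC (ln (INR (S (S n)))))) =
                Cmult (cexp (Cmult z (RtoC (ln (INR (S n)))))) (cexp (Cmult z (RtoC (ln_step n))))).
    { rewrite <- cexp_add. f_equal. unfold ln_step. rewrite RtoC_minus. ring. }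
    rewrite E, poch_S.
    replace (Cplus (Cplus z (RtoC 1)) (RtoC (INR n))) with (Cplus z (RtoC (INR (S n))))
      by (rewrite S_INR, RtoC_plus; ring).
    replace (fact (S n)) with (S n * fact n)%nat by reflexivity. rewrite mult_INR, RtoC_mult.
    field. split. apply Hz. apply poch_neq_0; auto.
Qed.

(* Stdlib's [ln 0 = 0], so [ln_gap 0 = 0]. *)
Definition ln_gap (n : nat) : R := ln (INR (S n)) - ln (INR n).

Lemma gamma_term_factorization z n : nonpole z ->
  gamma_term z n =
  Cmult (Cmult (Cinv z) (prodC (euler_factor z) n)) (cexp (Copp (Cmult z (RtoC (ln_gap n))))).
Proof.
  intros Hz. rewrite prodC_euler_factor by auto. unfold gamma_term. rewrite cpoch_poch, poch_S_shift.
  assert (E : cexp (Cmult z (RtoC (ln (INR n)))) =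
              Cmult (cexp (Cmult z (RtoC (ln (INR (S n)))))) (cexp (Copp (Cmult z (RtoC (ln_gap n)))))).
  { rewrite <- cexp_add. f_equal. unfold ln_gap. rewrite RtoC_minus. ring. }
  rewrite E. field. split. apply poch_neq_0, nonpole_add_1; auto. apply nonpole_neq_0; auto.
Qed.

Lemma ln_0 : ln 0 = 0.
Proof. unfold ln. destruct (Rlt_dec 0 0) as [H|H]. exfalso. apply (Rlt_irrefl 0 H). reflexivity. Qed.

Lemma ln_gap_bounds n : 0 <= ln_gap n /\ ln_gap n <= 1 /\ ln_gap n <= 2 / (INR n + 1).
Proof.
  destruct n.
  - unfold ln_gap. simpl. rewrite ln_1, ln_0. lra.
  - replace (ln_gap (S n)) with (ln_step n) by reflexivity. destruct (ln_step_bounds n) as [H1 [H2 H3]].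
    pose proof (INR_S_ge_1 n). assert (/ INR (S n) <= 1) by (rewrite <- Rinv_1; apply Rinv_le_contravar; lra).
    split; auto. split. lra. eapply Rle_trans. apply H2.
    set (t := INR (S n)) in *. unfold Rdiv. apply Rmult_le_reg_l with (t * (t + 1)). nra.
    replace (t * (t + 1) * / t) with (t + 1) by (field; lra).
    replace (t * (t + 1) * (2 * / (t + 1))) with (2 * t) by (field; lra). lra.
Qed.

Lemma clim_cexp_ln_gap z : clim (fun n => cexp (Copp (Cmult z (RtoC (ln_gap n))))) (RtoC 1).
Proof.
  apply (clim_of_rate _ _ (2 * Cmod z * (1 + 3 * Cmod z * exp (Cmod z)))).
  intros n. destruct (ln_gap_bounds n) as [E1 [E2 E3]].
  set (w := Copp (Cmult z (RtoC (ln_gap n)))).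
  assert (Hw : Cmod w = Cmod z * ln_gap n) by (unfold w; rewrite Cmod_opp, Cmod_mult, Cmod_R, Rabs_right; lra).
  pose proof (Cmod_ge_0 z). pose proof (Cmod_ge_0 w). pose proof (exp_pos (Cmod w)).
  eapply Rle_trans. apply Cmod_cexp_sub_1_le.
  assert (Cmod w <= Cmod z) by (rewrite Hw; nra).
  assert (Cmod w <= Cmod z * (2 / (INR n + 1))) by (rewrite Hw; apply Rmult_le_compat_l; auto).
  assert (1 + 3 * Cmod w * exp (Cmod w) <= 1 + 3 * Cmod z * exp (Cmod z)).
  { assert (exp (Cmod w) <= exp (Cmod z)) by (apply exp_le_compat; auto). nra. }
  replace (2 * Cmod z * (1 + 3 * Cmod z * exp (Cmod z)) / (INR n + 1)) with
    ((Cmod z * (2 / (INR n + 1))) * (1 + 3 * Cmod z * exp (Cmod z))) by (field; pose proof (pos_INR n); lra).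
  apply Rmult_le_compat; auto. nra.
Qed.

(* The product of the reciprocal factors converges too, so the limit cannot vanish. *)
Lemma euler_product_converges z : nonpole z -> exists A, clim (prodC (euler_factor z)) A /\ A <> RtoC 0.
Proof.
  intros Hz. destruct (nonpole_dist_bound z Hz) as [m [Hm Hb]].
  destruct (euler_factor_bound z m Hm Hb) as [Ka [HKa Ha]].
  destruct (euler_factor_inv_bound z) as [Kb [HKb Hb']].
  destruct (prod_converges _ _ HKa Ha) as [A HA]. apply clim_prodC_1_plus in HA.
  destruct (prod_converges _ _ HKb Hb') as [B HB]. apply clim_prodC_1_plus in HB.
  exists A. split; auto. intros E.
  assert (H1 : clim (fun n => Cmult (prodC (euler_factor z) n) (prodC (euler_factor_inv z) n)) (RtoC 1)).
  { eapply clim_ext with (N := O). 2: apply clim_const. intros n _. rewrite prodC_mult.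
    rewrite <- (prodC_1 n). apply prodC_ext. intros i. symmetry. apply (euler_factor_mul_inv z m Hm Hb). }
  pose proof (clim_unique _ _ _ (clim_mult _ _ _ _ HA HB) H1). rewrite E, Cmult_0_l in H.
  apply C1_nz. auto.
Qed.

Lemma clim_gamma_term z A : nonpole z -> clim (prodC (euler_factor z)) A ->
  clim (gamma_term z) (Cmult (Cinv z) A).
Proof.
  intros Hz HA. replace (Cmult (Cinv z) A) with (Cmult (Cmult (Cinv z) A) (RtoC 1)) by ring.
  eapply clim_ext with (N := O). intros n _. symmetry. apply gamma_term_factorization; auto.
  apply clim_mult. apply clim_scal. auto. apply clim_cexp_ln_gap.
Qed.

Lemma CGamma_of_clim z L : clim (gamma_term z) L -> CGamma z = L.
Proof.
  intros H. apply clim_filterlim in H. unfold CGamma.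
  assert (Hs := epsilon_spec (inhabits (RtoC 0)) (fun l => filterlim (gamma_term z) eventually (locally l))
                  (ex_intro _ L H)).
  exact (filterlim_locally_unique _ _ _ Hs H).
Qed.

Lemma CGamma_neq_0 z : nonpole z -> CGamma z <> RtoC 0.
Proof.
  intros Hz. destruct (euler_product_converges z Hz) as [A [HA HA0]].
  rewrite (CGamma_of_clim z _ (clim_gamma_term z A Hz HA)).
  apply Cmult_neq_0; auto. apply Cinv_neq_0, nonpole_neq_0; auto.
Qed.

Lemma gamma_term_succ z n : nonpole z -> (1 <= n)%nat ->
  gamma_term (Cplus z (RtoC 1)) n =
  Cmult (Cmult (gamma_term z n) z) (Cdiv (RtoC (INR n)) (Cplus z (RtoC (INR (S n))))).
Proof.
  intros Hz Hn. unfold gamma_term.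
  assert (Hn0 : 0 < INR n) by (apply lt_0_INR; lia).
  replace (Cmult (Cplus z (RtoC 1)) (RtoC (ln (INR n))))
    with (Cplus (Cmult z (RtoC (ln (INR n)))) (RtoC (ln (INR n)))) by ring.
  rewrite cexp_add, cexp_RtoC, exp_ln by auto.
  rewrite !cpoch_poch.
  assert (H0 := nonpole_neq_0 z Hz).
  assert (Hc : poch (Cplus z (RtoC 1)) (S n) = Cdiv (Cmult (poch z (S n)) (Cplus z (RtoC (INR (S n))))) z).
  { rewrite <- (poch_S z (S n)), (poch_S_shift z (S n)). field. auto. }
  assert (H2 := poch_neq_0 _ (S n) Hz). assert (H3 := Hz (S n)).
  rewrite Hc. field. repeat split; auto.
Qed.

Lemma clim_ratio_to_1 z : nonpole z ->
  clim (fun n => Cdiv (RtoC (INR n)) (Cplus z (RtoC (INR (S n))))) (RtoC 1).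
Proof.
  intros Hz. destruct (nonpole_dist_bound z Hz) as [m [Hm Hb]].
  set (rho := 1 + Cmod z / m).
  assert (Hr : 1 <= rho) by apply (rho_ge_1 z m Hm).
  apply (clim_of_rate _ _ (Cmod (Cplus z (RtoC 1)) * rho)). intros n.
  assert (Hq : Cplus z (RtoC (INR (S n))) <> RtoC 0) by apply Hz.
  replace (Cminus (Cdiv (RtoC (INR n)) (Cplus z (RtoC (INR (S n))))) (RtoC 1))
    with (Cdiv (Copp (Cplus z (RtoC 1))) (Cplus z (RtoC (INR (S n))))).
  2: { assert (Eq : RtoC (INR n) = Cminus (Cminus (Cplus z (RtoC (INR (S n)))) z) (RtoC 1))
         by (rewrite S_INR, RtoC_plus; ring).
       rewrite Eq at 1. field. auto. }
  rewrite Cmod_div, Cmod_opp by auto.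
  pose proof (Cmod_shift_ge z m Hm Hb (S n)) as Hql. fold rho in Hql.
  pose proof (INR_S_ge_1 n).
  eapply Rle_trans. apply (Rdiv_le_compat _ _ (Cmod (Cplus z (RtoC 1))) (INR (S n) / rho)).
  apply Cmod_ge_0. lra. apply Rdiv_lt_0_compat; lra. exact Hql.
  right. rewrite S_INR in *. field. split; lra.
Qed.

Lemma CGamma_succ z : nonpole z -> CGamma (Cplus z (RtoC 1)) = Cmult z (CGamma z).
Proof.
  intros Hz. destruct (euler_product_converges z Hz) as [A [HA HA0]].
  pose proof (clim_gamma_term z A Hz HA) as HG. rewrite (CGamma_of_clim z _ HG).
  apply CGamma_of_clim.
  replace (Cmult z (Cmult (Cinv z) A)) with (Cmult (Cmult (Cmult (Cinv z) A) z) (RtoC 1)) by ring.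
  eapply clim_ext with (N := 1%nat). intros n Hn. symmetry. apply gamma_term_succ; auto.
  apply clim_mult. apply clim_mult. auto. apply clim_const. apply clim_ratio_to_1; auto.
Qed.

Lemma CGamma_add_nat a k : nonpole a -> CGamma (Cplus a (RtoC (INR k))) = Cmult (poch a k) (CGamma a).
Proof.
  intros Ha. induction k.
  - simpl INR. rewrite Cplus_0_r. unfold poch. simpl. ring.
  - rewrite poch_S. replace (Cplus a (RtoC (INR (S k)))) with (Cplus (Cplus a (RtoC (INR k))) (RtoC 1))
      by (rewrite S_INR, RtoC_plus; ring).
    rewrite CGamma_succ by (apply nonpole_add_nat; auto). rewrite IHk. ring.
Qed.

(* Applied with [Gamma z = A/z] and [Gamma (z+h) = A B/(z+h)], [B] the product of the factor ratios. *)
Lemma quotient_expansion_bound (z h A B S : C) (m a b : R) :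
  0 < m -> m <= Cmod z -> m / 2 <= Cmod (Cplus z h) ->
  Cmod (Cminus B (RtoC 1)) <= b * Cmod h ->
  Cmod (Cminus (Cminus B (RtoC 1)) (Cmult h S)) <= a * Cmod h ^ 2 ->
  Cmod (Cminus (Cminus (Cmult (Cinv (Cplus z h)) (Cmult A B)) (Cmult (Cinv z) A))
               (Cmult h (Cmult (Cmult (Cinv z) A) (Cminus S (Cinv z)))))
    <= Cmod A / m * (a + b * (2 / m) + 2 / (m * m)) * Cmod h ^ 2.
Proof.
  intros Hm Hzm Hzhm HB1 HBS.
  assert (Hz0 : z <> RtoC 0) by (intros E; rewrite E, Cmod_0 in Hzm; lra).
  assert (Hzh0 : Cplus z h <> RtoC 0) by (intros E; rewrite E, Cmod_0 in Hzhm; lra).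
  pose proof (Cmod_ge_0 h) as Hh0.
  set (X := Cplus (Cminus (Cminus (Cminus B (RtoC 1)) (Cmult h S))
            (Cdiv (Cmult h (Cminus B (RtoC 1))) (Cplus z h))) (Cdiv (Cmult h h) (Cmult z (Cplus z h)))).
  replace (Cminus (Cminus (Cmult (Cinv (Cplus z h)) (Cmult A B)) (Cmult (Cinv z) A))
                  (Cmult h (Cmult (Cmult (Cinv z) A) (Cminus S (Cinv z)))))
    with (Cmult (Cmult (Cinv z) A) X) by (unfold X; field; auto).
  rewrite Cmod_mult, Cmod_mult, Cmod_inv by auto.
  assert (T1 : Cmod (Cdiv (Cmult h (Cminus B (RtoC 1))) (Cplus z h)) <= b * (2 / m) * Cmod h ^ 2).
  { rewrite Cmod_div, Cmod_mult by auto. pose proof (Cmod_ge_0 (Cminus B (RtoC 1))).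
    eapply Rle_trans. apply (Rdiv_le_compat _ _ (Cmod h * (b * Cmod h)) (m / 2)).
    nra. apply Rmult_le_compat_l; auto. lra. auto.
    right. field. lra. }
  assert (T2 : Cmod (Cdiv (Cmult h h) (Cmult z (Cplus z h))) <= 2 / (m * m) * Cmod h ^ 2).
  { rewrite Cmod_div, !Cmod_mult by (apply Cmult_neq_0; auto). eapply Rle_trans.
    apply (Rdiv_le_compat _ _ (Cmod h * Cmod h) (m * (m / 2))). nra. lra. nra.
    apply Rmult_le_compat; lra.
    right. field. lra. }
  assert (TX : Cmod X <= (a + b * (2 / m) + 2 / (m * m)) * Cmod h ^ 2).
  { unfold X. eapply Rle_trans. apply Cmod_triangle. unfold Cminus at 1.
    eapply Rle_trans. apply Rplus_le_compat_r. apply Cmod_triangle. rewrite Cmod_opp. lra. }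
  assert (HAz : / Cmod z * Cmod A <= Cmod A / m).
  { unfold Rdiv. rewrite Rmult_comm. apply Rmult_le_compat_l. apply Cmod_ge_0.
    apply Rinv_le_contravar; lra. }
  pose proof (Cmod_ge_0 X). pose proof (Cmod_ge_0 A).
  assert (0 <= / Cmod z * Cmod A) by (apply Rmult_le_pos; auto; left; apply Rinv_0_lt_compat; lra).
  replace (Cmod A / m * (a + b * (2 / m) + 2 / (m * m)) * Cmod h ^ 2)
    with (Cmod A / m * ((a + b * (2 / m) + 2 / (m * m)) * Cmod h ^ 2)) by ring.
  apply Rmult_le_compat; auto.
Qed.

Lemma CGamma_has_derive z : nonpole z -> exists D, is_derive CGamma z D.
Proof.
  intros Hz. destruct (nonpole_dist_bound z Hz) as [m [Hm Hb]].
  destruct (euler_product_converges z Hz) as [A [HA HA0]].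
  destruct (euler_factor_ratio_expansion z m Hm Hb) as [K1 [HK1 Hxc]].
  destruct (euler_factor_log_deriv_bound z m Hm Hb) as [K2 [HK2 Hc]].
  destruct (sum_converges _ K2 HK2 Hc) as [S HS].
  assert (Hzm : m <= Cmod z) by (specialize (Hb O); simpl INR in Hb; rewrite Cplus_0_r in Hb; auto).
  set (K0 := prod_sub_1_const (K1 + K2)).
  exists (Cmult (Cmult (Cinv z) A) (Cminus S (Cinv z))).
  apply is_derive_of_quadratic_remainder.
  exists (Rmin 1 (m / 2)), (Cmod A / m * (2 * (K0 * (K1 + K2) + K1) + K0 * (2 / m) + 2 / (m * m))).
  split. apply Rmin_pos; lra.
  intros h Hh. assert (Hh1 : Cmod h <= 1) by (left; eapply Rlt_le_trans; [apply Hh|apply Rmin_l]).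
  assert (Hh2 : Cmod h <= m / 2) by (left; eapply Rlt_le_trans; [apply Hh|apply Rmin_r]).
  assert (Hzh : nonpole (Cplus z h)) by (apply (nonpole_near z m); auto; lra).
  assert (Hx : forall i, Cmod (Cminus (Cminus (euler_factor_ratio z h i) (RtoC 1))
                                      (Cmult h (euler_factor_log_deriv z i))) <= K1 * Cmod h ^ 2 * inv_sq i)
    by (intros i; apply Hxc; auto).
  pose proof (Cmod_perturbation_le _ _ h K1 K2 HK1 Hh1 Hc Hx) as Hx'.
  assert (HKh : 0 <= (K1 + K2) * Cmod h) by (pose proof (Cmod_ge_0 h); nra).
  destruct (prod_converges _ _ HKh Hx') as [B HB].
  destruct (prod_limit_linearization _ _ h K1 K2 HK1 HK2 Hh1 Hc Hx B S HB HS) as [HB1 HBS].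
  apply clim_prodC_1_plus in HB.
  assert (HG1 : CGamma z = Cmult (Cinv z) A) by (apply CGamma_of_clim, clim_gamma_term; auto).
  assert (HG2 : CGamma (Cplus z h) = Cmult (Cinv (Cplus z h)) (Cmult A B)).
  { apply CGamma_of_clim, clim_gamma_term; auto.
    eapply clim_ext with (N := O). 2: apply (clim_mult _ _ _ _ HA HB).
    intros n _. cbv beta. rewrite prodC_mult. apply prodC_ext. intros i. symmetry.
    apply euler_factor_shift. apply Hz. apply Hzh. }
  rewrite HG1, HG2. apply quotient_expansion_bound; auto.
  pose proof (Cmod_plus_ge z h). lra.
Qed.

Lemma CGamma_derive z : nonpole z -> is_derive CGamma z (CGamma' z).
Proof.
  intros Hz. destruct (CGamma_has_derive z Hz) as [D HD]. unfold CGamma'.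
  apply (epsilon_spec (inhabits (RtoC 0)) (fun d => is_derive (K := C_AbsRing) (V := C_NormedModule) CGamma z d)).
  exists D. exact HD.
Qed.

Lemma sumC_S f N : sumC f (S N) = Cplus (sumC f N) (f N).
Proof. reflexivity. Qed.

Lemma sumC_ext f g N : (forall i, (i < N)%nat -> f i = g i) -> sumC f N = sumC g N.
Proof. induction N; intros H; simpl; auto. rewrite IHN, H; auto. Qed.

Lemma sumC_plus f g N : sumC (fun i => Cplus (f i) (g i)) N = Cplus (sumC f N) (sumC g N).
Proof. induction N; simpl. ring. rewrite IHN. ring. Qed.

Lemma sumC_scal c f N : sumC (fun i => Cmult c (f i)) N = Cmult c (sumC f N).
Proof. induction N; simpl. ring. rewrite IHN. ring. Qed.

Lemma sumC_0 N : sumC (fun _ => RtoC 0) N = RtoC 0.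
Proof. induction N; simpl; auto. rewrite IHN. ring. Qed.

Lemma sumC_shift f N : sumC f (S N) = Cplus (f O) (sumC (fun i => f (S i)) N).
Proof. induction N. simpl. ring. rewrite sumC_S, IHN. simpl. ring. Qed.

Lemma csum_sumC n f : csum n f = sumC f (S n).
Proof. induction n; simpl. ring. rewrite IHn. reflexivity. Qed.

Lemma sumC_triangle_exchange (F : nat -> nat -> C) N :
  sumC (fun k => sumC (fun j => F j k) (S k)) N = sumC (fun j => sumC (fun i => F j (j + i)%nat) (N - j)) N.
Proof.
  induction N.
  - reflexivity.
  - rewrite sumC_S, IHN.
    rewrite (sumC_ext (fun j => sumC (fun i => F j (j + i)%nat) (S N - j))
                      (fun j => Cplus (sumC (fun i => F j (j + i)%nat) (N - j)) (F j N))).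
    2: { intros i Hi. replace (S N - i)%nat with (S (N - i)) by lia. rewrite sumC_S. f_equal. f_equal. lia. }
    rewrite sumC_plus, (sumC_S (fun j => sumC (fun i => F j (j + i)%nat) (N - j))).
    replace (N - N)%nat with O by lia. simpl. ring.
Qed.

Lemma nbinom_0 n : nbinom n 0 = RtoC 1.
Proof. unfold nbinom, Binomial.C. rewrite Nat.sub_0_r. simpl. f_equal. field. apply INR_fact_neq_0. Qed.

Lemma nbinom_diag n : nbinom n n = RtoC 1.
Proof. unfold nbinom, Binomial.C. rewrite Nat.sub_diag. simpl. f_equal. field. apply INR_fact_neq_0. Qed.

Lemma nbinom_pascal n i : (i < n)%nat -> nbinom (S n) (S i) = Cplus (nbinom n i) (nbinom n (S i)).
Proof. intros H. unfold nbinom. rewrite <- RtoC_plus. f_equal. symmetry. apply pascal. auto. Qed.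

Lemma sumC_binom_pascal m (X : nat -> C) :
  sumC (fun i => Cmult (nbinom (S m) i) (X i)) (S (S m)) =
  Cplus (sumC (fun i => Cmult (nbinom m i) (X i)) (S m)) (sumC (fun i => Cmult (nbinom m i) (X (S i))) (S m)).
Proof.
  rewrite sumC_shift, nbinom_0, (sumC_S (fun i => Cmult (nbinom (S m) (S i)) (X (S i))) m).
  rewrite (sumC_ext (fun i => Cmult (nbinom (S m) (S i)) (X (S i)))
                    (fun i => Cplus (Cmult (nbinom m i) (X (S i))) (Cmult (nbinom m (S i)) (X (S i))))).
  2: { intros i Hi. rewrite nbinom_pascal by auto. ring. }
  rewrite sumC_plus, nbinom_diag.
  rewrite (sumC_shift (fun i => Cmult (nbinom m i) (X i)) m), nbinom_0.
  rewrite (sumC_S (fun i => Cmult (nbinom m i) (X (S i))) m), nbinom_diag. ring.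
Qed.

Lemma sumC_binom_alt m : sumC (fun i => Cmult (nbinom (S m) i) (RtoC ((-1) ^ i))) (S (S m)) = RtoC 0.
Proof.
  rewrite sumC_binom_pascal, <- sumC_plus, <- (sumC_0 (S m)).
  apply sumC_ext. intros i _. simpl pow. rewrite RtoC_mult. ring.
Qed.

Lemma poch_vandermonde m : forall a b,
  sumC (fun i => Cmult (Cmult (nbinom m i) (poch a i)) (poch b (m - i))) (S m) = poch (Cplus a b) m.
Proof.
  induction m; intros a b.
  - simpl. rewrite nbinom_diag. unfold poch. simpl. ring.
  - rewrite (sumC_ext _ (fun i => Cmult (nbinom (S m) i) (Cmult (poch a i) (poch b (S m - i))))).
    2: { intros; ring. }
    rewrite sumC_binom_pascal, poch_S, <- IHm, <- sumC_plus, Cmult_comm, <- sumC_scal.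
    apply sumC_ext. intros i Hi.
    replace (S m - i)%nat with (S (m - i)) by lia. replace (S m - S i)%nat with (m - i)%nat by lia.
    rewrite !poch_S.
    assert (E : RtoC (INR m) = Cplus (RtoC (INR (m - i))) (RtoC (INR i))).
    { rewrite <- RtoC_plus, <- plus_INR. f_equal. f_equal. lia. }
    rewrite E. ring.
Qed.

Definition alt_pair_coeff (j : nat) : C :=
  Cdiv (RtoC ((-1) ^ j)) (Cmult (Cplus (cn j) (RtoC 1)) (Cplus (cn j) (RtoC 2))).

Lemma cn_add_1_neq_0 k : Cplus (cn k) (RtoC 1) <> RtoC 0.
Proof. unfold cn. rewrite <- RtoC_plus. apply RtoC_neq_0. pose proof (pos_INR k). lra. Qed.

Lemma cn_add_2_neq_0 k : Cplus (cn k) (RtoC 2) <> RtoC 0.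
Proof. unfold cn. rewrite <- RtoC_plus. apply RtoC_neq_0. pose proof (pos_INR k). lra. Qed.

Lemma nbinom_SS_ratio k j : (j <= k)%nat ->
  Cmult (Cmult (nbinom k j) (Cplus (cn k) (RtoC 1))) (Cplus (cn k) (RtoC 2)) =
  Cmult (Cmult (nbinom (S (S k)) (S (S j))) (Cplus (cn j) (RtoC 1))) (Cplus (cn j) (RtoC 2)).
Proof.
  intros H. unfold nbinom, cn. rewrite <- !RtoC_plus, <- !RtoC_mult. f_equal.
  unfold Binomial.C. replace (S (S k) - S (S j))%nat with (k - j)%nat by lia.
  rewrite !fact_simpl, !mult_INR, !S_INR.
  pose proof (INR_fact_neq_0 k). pose proof (INR_fact_neq_0 j). pose proof (INR_fact_neq_0 (k - j)).
  pose proof (pos_INR k). pose proof (pos_INR j).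
  field. repeat split; lra.
Qed.

Lemma nbinom_1 k : nbinom (S (S k)) 1 = Cplus (cn k) (RtoC 2).
Proof.
  unfold nbinom, cn. rewrite <- RtoC_plus. f_equal. unfold Binomial.C.
  replace (S (S k) - 1)%nat with (S k) by lia. rewrite (fact_simpl (S k)), mult_INR.
  pose proof (INR_fact_neq_0 (S k)). replace (INR (fact 1)) with 1 by reflexivity.
  rewrite (S_INR (S k)), S_INR. field. auto.
Qed.

(* Shifting the index by two turns the sum into the alternating sum of row [k+2] minus its first two
   terms. *)
Lemma sumC_binom_alt_pair_coeff k :
  sumC (fun j => Cmult (nbinom k j) (alt_pair_coeff j)) (S k) = Cinv (Cplus (cn k) (RtoC 2)).
Proof.
  assert (H1 := cn_add_1_neq_0 k). assert (H2 := cn_add_2_neq_0 k).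
  rewrite (sumC_ext _ (fun j => Cmult (Cinv (Cmult (Cplus (cn k) (RtoC 1)) (Cplus (cn k) (RtoC 2))))
                                       (Cmult (nbinom (S (S k)) (S (S j))) (RtoC ((-1) ^ (S (S j))))))).
  2: { intros j Hj. unfold alt_pair_coeff. assert (E := nbinom_SS_ratio k j ltac:(lia)).
       assert (nbinom k j = Cdiv (Cmult (Cmult (nbinom (S (S k)) (S (S j))) (Cplus (cn j) (RtoC 1)))
                                        (Cplus (cn j) (RtoC 2)))
                                 (Cmult (Cplus (cn k) (RtoC 1)) (Cplus (cn k) (RtoC 2)))).
       { rewrite <- E. field. auto. }
       rewrite H. replace ((-1) ^ S (S j)) with ((-1) ^ j) by (simpl; ring).
       field. repeat split; auto using cn_add_1_neq_0, cn_add_2_neq_0. }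
  rewrite sumC_scal.
  pose proof (sumC_binom_alt (S k)) as A. rewrite sumC_shift, sumC_shift in A.
  cbv beta in A. rewrite nbinom_0, nbinom_1 in A.
  replace (RtoC ((-1) ^ 0)) with (RtoC 1) in A by (f_equal; simpl; ring).
  replace (RtoC ((-1) ^ 1)) with (Copp (RtoC 1)) in A by (rewrite <- RtoC_opp; f_equal; simpl; ring).
  set (X := sumC (fun i => Cmult (nbinom (S (S k)) (S (S i))) (RtoC ((-1) ^ S (S i)))) (S k)) in *.
  assert (E : X = Cplus (cn k) (RtoC 1)).
  { replace (Cplus (cn k) (RtoC 1)) with (Cminus (Cplus (cn k) (RtoC 2)) (RtoC 1)).
    2: { unfold cn. rewrite <- !RtoC_plus, <- RtoC_minus. f_equal. ring. }
    replace X with (Cminus X (Cplus (Cmult (RtoC 1) (RtoC 1)) (Cplus (Cmult (Cplus (cn k) (RtoC 2)) (Copp (RtoC 1))) X)))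
      by (rewrite A; ring).
    ring. }
  rewrite E. field. auto.
Qed.

Lemma nbinom_mul_nbinom n j i : (j + i <= n)%nat ->
  Cmult (nbinom n (j + i)) (nbinom (j + i) j) = Cmult (nbinom n j) (nbinom (n - j) i).
Proof.
  intros H. unfold nbinom. rewrite <- !RtoC_mult. f_equal. unfold Binomial.C.
  replace (j + i - j)%nat with i by lia. replace (n - j - i)%nat with (n - (j + i))%nat by lia.
  pose proof (INR_fact_neq_0 n). pose proof (INR_fact_neq_0 j). pose proof (INR_fact_neq_0 i).
  pose proof (INR_fact_neq_0 (j + i)). pose proof (INR_fact_neq_0 (n - j)). pose proof (INR_fact_neq_0 (n - (j + i))).
  field. repeat split; auto.
Qed.

Lemma poch_binomial_transform n a b (g : nat -> C) :
  sumC (fun k => Cmult (Cmult (Cmult (nbinom n k) (poch a k)) (poch b (n - k)))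
                       (sumC (fun j => Cmult (nbinom k j) (g j)) (S k))) (S n)
  = sumC (fun j => Cmult (Cmult (Cmult (nbinom n j) (poch a j)) (poch (Cplus (Cplus a b) (RtoC (INR j))) (n - j)))
                         (g j)) (S n).
Proof.
  set (P := fun k => Cmult (Cmult (nbinom n k) (poch a k)) (poch b (n - k))).
  rewrite (sumC_ext _ (fun k => sumC (fun j => Cmult (P k) (Cmult (nbinom k j) (g j))) (S k))).
  2: { intros k _. rewrite sumC_scal. reflexivity. }
  rewrite (sumC_triangle_exchange (fun j k => Cmult (P k) (Cmult (nbinom k j) (g j)))).
  apply sumC_ext. intros j Hj. replace (S n - j)%nat with (S (n - j)) by lia.
  rewrite (sumC_ext _ (fun i => Cmult (Cmult (Cmult (nbinom n j) (poch a j)) (g j))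
             (Cmult (Cmult (nbinom (n - j) i) (poch (Cplus a (RtoC (INR j))) i)) (poch b (n - j - i))))).
  2: { intros i Hi. unfold P. rewrite poch_add. replace (n - (j + i))%nat with (n - j - i)%nat by lia.
       assert (E := nbinom_mul_nbinom n j i ltac:(lia)).
       transitivity (Cmult (Cmult (Cmult (nbinom n (j + i)) (nbinom (j + i) j))
                                  (Cmult (poch a j) (poch (Cplus a (RtoC (INR j))) i)))
                           (Cmult (poch b (n - j - i)) (g j))).
       ring. rewrite E. ring. }
  rewrite sumC_scal, poch_vandermonde.
  replace (Cplus (Cplus a (RtoC (INR j))) b) with (Cplus (Cplus a b) (RtoC (INR j))) by ring. ring.
Qed.

Lemma poch_sum_identity n a b :
  sumC (fun k => Cmult (Cmult (Cmult (nbinom n k) (poch a k)) (poch b (n - k))) (Cinv (Cplus (cn k) (RtoC 2)))) (S n)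
  = sumC (fun j => Cmult (Cmult (Cmult (nbinom n j) (poch a j)) (poch (Cplus (Cplus a b) (RtoC (INR j))) (n - j)))
                         (alt_pair_coeff j)) (S n).
Proof.
  rewrite <- poch_binomial_transform. apply sumC_ext. intros k _. rewrite sumC_binom_alt_pair_coeff. reflexivity.
Qed.

Lemma Cinv_0 : Cinv (RtoC 0) = RtoC 0.
Proof. unfold Cinv, RtoC; simpl. f_equal; unfold Rdiv; ring. Qed.

(* Unconditional, thanks to [Cinv 0 = 0]. *)
Lemma Cinv_mult x y : Cinv (Cmult x y) = Cmult (Cinv x) (Cinv y).
Proof.
  destruct (Ceq_dec x (RtoC 0)) as [Hx|Hx]. subst. rewrite Cmult_0_l, Cinv_0. ring.
  destruct (Ceq_dec y (RtoC 0)) as [Hy|Hy]. subst. rewrite Cmult_0_r, Cinv_0. ring.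
  field. auto.
Qed.

Lemma Cinv_Cinv x : Cinv (Cinv x) = x.
Proof.
  destruct (Ceq_dec x (RtoC 0)) as [Hx|Hx]. subst. rewrite !Cinv_0. auto.
  field. auto.
Qed.

Lemma Cinv_Cbinom x y : Cinv (Cbinom x y) =
  Cmult (Cmult (CGamma (Cplus y (RtoC 1))) (CGamma (Cplus (Cminus x y) (RtoC 1)))) (Cinv (CGamma (Cplus x (RtoC 1)))).
Proof. unfold Cbinom, Cdiv. rewrite Cinv_mult, Cinv_Cinv. ring. Qed.

Lemma is_derive_Cinv w : w <> RtoC 0 ->
  is_derive (K := C_AbsRing) (V := C_NormedModule) Cinv w (Copp (Cmult (Cinv w) (Cinv w))).
Proof.
  intros Hw. apply is_derive_of_quadratic_remainder. assert (Hm : 0 < Cmod w) by (apply Cmod_gt_0; auto).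
  exists (Cmod w / 2), (2 / (Cmod w ^ 3)). split. lra.
  intros h Hh. assert (Hwh : Cmod w / 2 <= Cmod (Cplus w h)) by (pose proof (Cmod_plus_ge w h); lra).
  assert (Hwh0 : Cplus w h <> RtoC 0) by (intros E; rewrite E, Cmod_0 in Hwh; lra).
  replace (Cminus (Cminus (Cinv (Cplus w h)) (Cinv w)) (Cmult h (Copp (Cmult (Cinv w) (Cinv w)))))
    with (Cdiv (Cmult h h) (Cmult (Cmult w w) (Cplus w h))) by (field; auto).
  rewrite Cmod_div, !Cmod_mult by (repeat apply Cmult_neq_0; auto).
  eapply Rle_trans. apply (Rdiv_le_compat _ _ (Cmod h * Cmod h) (Cmod w * Cmod w * (Cmod w / 2))).
  pose proof (Cmod_ge_0 h); nra. lra. apply Rmult_lt_0_compat; [nra|lra]. apply Rmult_le_compat_l; [nra|lra].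
  right. field. lra.
Qed.

Lemma is_derive_eq (f : C -> C) x l l' :
  is_derive (K := C_AbsRing) (V := C_NormedModule) f x l -> l = l' ->
  is_derive (K := C_AbsRing) (V := C_NormedModule) f x l'.
Proof. intros H E; subst; auto. Qed.

Lemma is_derive_comp_translate (f g : C -> C) r e d : (forall y, g y = Cplus y e) ->
  is_derive (K := C_AbsRing) (V := C_NormedModule) f (Cplus r e) d ->
  is_derive (K := C_AbsRing) (V := C_NormedModule) (fun y => f (g y)) r d.
Proof.
  intros Hg Hf.
  apply (is_derive_ext (fun y => f (Cplus y e))). intros t. rewrite Hg. auto.
  pose proof (is_derive_plus (K := C_AbsRing) (V := AbsRing_NormedModule C_AbsRing) (fun y => y) (fun _ => e) r one zero
                (is_derive_id r) (is_derive_const (V := AbsRing_NormedModule C_AbsRing) e r)) as Hd.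
  pose proof (is_derive_comp f (fun y => plus y e) r d _ Hf Hd) as H.
  apply (is_derive_eq _ _ _ _ H). change (Cmult (Cplus (RtoC 1) (RtoC 0)) d = d). ring.
Qed.

(* [C_NormedModule] and [AbsRing_NormedModule C_AbsRing] are two normed-module structures on [C]
   that are not convertible; Coquelicot's product rule is stated for the latter. *)
Lemma is_derive_to_AbsRing (f : C -> C) x d :
  is_derive (K:=C_AbsRing) (V:=C_NormedModule) f x d ->
  is_derive (K:=C_AbsRing) (V:=AbsRing_NormedModule C_AbsRing) f x d.
Proof.
  intros [[H1 H2 H3] Hd]. split.
  - split. exact H1. exact H2. exact H3.
  - intros x0 Hx0 eps. exact (Hd x0 Hx0 eps).
Qed.

Lemma is_derive_of_AbsRing (f : C -> C) x d :
  is_derive (K:=C_AbsRing) (V:=AbsRing_NormedModule C_AbsRing) f x d ->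
  is_derive (K:=C_AbsRing) (V:=C_NormedModule) f x d.
Proof.
  intros [[H1 H2 H3] Hd]. split.
  - split. exact H1. exact H2. exact H3.
  - intros x0 Hx0 eps. exact (Hd x0 Hx0 eps).
Qed.

Lemma is_derive_Cmult (f g : C -> C) x df dg :
  is_derive (K := C_AbsRing) (V := C_NormedModule) f x df ->
  is_derive (K := C_AbsRing) (V := C_NormedModule) g x dg ->
  is_derive (K := C_AbsRing) (V := C_NormedModule) (fun y => Cmult (f y) (g y)) x
            (Cplus (Cmult df (g x)) (Cmult (f x) dg)).
Proof.
  intros Hf Hg. apply is_derive_of_AbsRing.
  exact (is_derive_mult (K := C_AbsRing) f g x df dg (is_derive_to_AbsRing _ _ _ Hf)
                        (is_derive_to_AbsRing _ _ _ Hg) Cmult_comm).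
Qed.

Lemma is_derive_Cconst (c : C) x : is_derive (K := C_AbsRing) (V := C_NormedModule) (fun _ => c) x (RtoC 0).
Proof. exact (is_derive_const (K := C_AbsRing) (V := C_NormedModule) c x). Qed.

Lemma is_derive_csum n (f : nat -> C -> C) (d : nat -> C) x :
  (forall k, (k <= n)%nat -> is_derive (K := C_AbsRing) (V := C_NormedModule) (f k) x (d k)) ->
  is_derive (K := C_AbsRing) (V := C_NormedModule) (fun y => csum n (fun k => f k y)) x (csum n d).
Proof.
  intros H. induction n.
  - simpl. apply H. lia.
  - simpl. apply (is_derive_plus (K := C_AbsRing) (V := C_NormedModule)); auto.
Qed.

Lemma is_derive_inv_Cbinom c b r :
  nonpole (Cplus b (RtoC 1)) -> nonpole (Cplus (Cminus (Cplus c r) b) (RtoC 1)) ->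
  nonpole (Cplus (Cplus c r) (RtoC 1)) ->
  is_derive (K := C_AbsRing) (V := C_NormedModule) (fun y => Cinv (Cbinom (Cplus c y) b)) r
    (Cmult (Cinv (Cbinom (Cplus c r) b))
       (Cminus (digamma (Cplus (Cminus (Cplus c r) b) (RtoC 1))) (digamma (Cplus (Cplus c r) (RtoC 1))))).
Proof.
  intros Hb HA HB.
  set (A := Cplus (Cminus (Cplus c r) b) (RtoC 1)) in *.
  set (B := Cplus (Cplus c r) (RtoC 1)) in *.
  apply (is_derive_ext (fun y => Cmult (Cmult (CGamma (Cplus b (RtoC 1))) (CGamma (Cplus (Cminus (Cplus c y) b) (RtoC 1))))
                                       (Cinv (CGamma (Cplus (Cplus c y) (RtoC 1)))))).
  { intros t. rewrite Cinv_Cbinom. reflexivity. }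
  assert (dA : is_derive (K := C_AbsRing) (V := C_NormedModule)
                 (fun y => CGamma (Cplus (Cminus (Cplus c y) b) (RtoC 1))) r (CGamma' A)).
  { apply (is_derive_comp_translate CGamma (fun y => Cplus (Cminus (Cplus c y) b) (RtoC 1)) r (Cplus (Cminus c b) (RtoC 1))).
    intros; ring. replace (Cplus r (Cplus (Cminus c b) (RtoC 1))) with A by (unfold A; ring). apply CGamma_derive; auto. }
  assert (dB : is_derive (K := C_AbsRing) (V := C_NormedModule)
                 (fun y => CGamma (Cplus (Cplus c y) (RtoC 1))) r (CGamma' B)).
  { apply (is_derive_comp_translate CGamma (fun y => Cplus (Cplus c y) (RtoC 1)) r (Cplus c (RtoC 1))).
    intros; ring. replace (Cplus r (Cplus c (RtoC 1))) with B by (unfold B; ring). apply CGamma_derive; auto. }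
  assert (GB0 : CGamma B <> RtoC 0) by (apply CGamma_neq_0; auto).
  assert (GA0 : CGamma A <> RtoC 0) by (apply CGamma_neq_0; auto).
  pose proof (is_derive_comp Cinv (fun y => CGamma (Cplus (Cplus c y) (RtoC 1))) r _ _
                (is_derive_Cinv _ GB0) (is_derive_to_AbsRing _ _ _ dB)) as dIB.
  pose proof (is_derive_Cmult _ _ r _ _
                (is_derive_Cmult _ _ r _ _
                   (is_derive_Cconst (CGamma (Cplus b (RtoC 1))) r) dA)
                dIB) as D.
  apply (is_derive_eq _ _ _ _ D).
  rewrite Cinv_Cbinom. fold A B. unfold digamma.
  change (scal (CGamma' B) (Copp (Cmult (Cinv (CGamma B)) (Cinv (CGamma B))))) with
    (Cmult (CGamma' B) (Copp (Cmult (Cinv (CGamma B)) (Cinv (CGamma B))))).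
  match goal with |- ?a = ?b => change (@eq C a b) end.
  field. split; auto.
Qed.

Lemma nonpole_of_not_negint z : ~ negint z -> nonpole (Cplus z (RtoC 1)).
Proof.
  intros H j E. apply H. exists j.
  replace z with (Cminus (Cplus (Cplus z (RtoC 1)) (RtoC (INR j))) (Cplus (RtoC (INR j)) (RtoC 1))) by ring.
  rewrite E, S_INR, RtoC_opp, RtoC_plus. ring.
Qed.

Lemma nonpole_eq z w : z = w -> nonpole z -> nonpole w.
Proof. intros E; subst; auto. Qed.

Lemma cn_add_neq_0 s k : s <> RtoC 0 -> ~ negint s -> Cplus (cn k) s <> RtoC 0.
Proof.
  intros H0 Hn E. destruct k.
  - apply H0. unfold cn in E. simpl in E. rewrite Cplus_0_l in E. auto.
  - apply Hn. exists k. replace s with (Cminus (Cplus (cn (S k)) s) (cn (S k))) by ring.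
    rewrite E. unfold cn. rewrite RtoC_opp. ring.
Qed.

Lemma csum_ext n f g : (forall k, (k <= n)%nat -> f k = g k) -> csum n f = csum n g.
Proof. intros H. rewrite !csum_sumC. apply sumC_ext. intros; apply H; lia. Qed.

Lemma csum_minus n f g : csum n (fun k => Cminus (f k) (g k)) = Cminus (csum n f) (csum n g).
Proof. induction n; simpl. auto. rewrite IHn. ring. Qed.

Lemma csum_scal n c f : csum n (fun k => Cmult c (f k)) = Cmult c (csum n f).
Proof. induction n; simpl. auto. rewrite IHn. ring. Qed.

Definition fixed_top_sum (n : nat) (s rho : C) : C :=
  csum n (fun k => Cdiv (nbinom n k)
    (Cmult (Cmult (Cplus (cn k) (RtoC 2)) (Cplus (cn k) s)) (Cbinom (Cplus (cn n) rho) (Cplus (cn k) s)))).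

Definition moving_top_sum (n : nat) (s rho : C) : C :=
  csum n (fun k => Cdiv (Cmult (nbinom n k) (sgn k))
    (Cmult (Cmult (Cmult (Cplus (cn k) (RtoC 1)) (Cplus (cn k) (RtoC 2))) (Cplus (cn k) s))
           (Cbinom (Cplus (cn k) rho) (Cplus (cn k) s)))).

Section PochhammerForm.

Variables (n : nat) (s rho : C).
Hypothesis s_neq0 : s <> RtoC 0.
Hypothesis s_not_negint : ~ negint s.
Hypothesis rho_nonpole : nonpole (Cplus rho (RtoC 1)).
Hypothesis rho_s_nonpole : nonpole (Cplus (Cminus rho s) (RtoC 1)).

Let a1 := Cplus s (RtoC 1).
Let bb := Cplus (Cminus rho s) (RtoC 1).
Let R1 := Cplus rho (RtoC 1).
Let Kc := Cmult (Cmult (CGamma a1) (CGamma bb)) (Cinv (Cmult (Cmult s (poch R1 n)) (CGamma R1))).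

Lemma CGamma_cn_add_s_1 k : CGamma (Cplus (Cplus (cn k) s) (RtoC 1)) = Cmult (poch a1 k) (CGamma a1).
Proof.
  rewrite <- CGamma_add_nat by (apply nonpole_of_not_negint; auto). f_equal. unfold a1, cn. ring.
Qed.

Lemma poch_add_1_eq k : poch a1 k = Cdiv (Cmult (poch s k) (Cplus s (RtoC (INR k)))) s.
Proof.
  unfold a1. rewrite <- poch_S, poch_S_shift. field. auto.
Qed.

Lemma fixed_top_sum_poch : fixed_top_sum n s rho =
  Cmult Kc (sumC (fun k => Cmult (Cmult (Cmult (nbinom n k) (poch s k)) (poch bb (n - k)))
                                 (Cinv (Cplus (cn k) (RtoC 2)))) (S n)).
Proof.
  assert (GR : CGamma R1 <> RtoC 0) by (apply CGamma_neq_0; auto).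
  assert (PRn : poch R1 n <> RtoC 0) by (apply poch_neq_0; auto).
  unfold fixed_top_sum. rewrite csum_sumC, <- sumC_scal. apply sumC_ext. intros k Hk.
  unfold Cdiv. rewrite Cinv_mult, Cinv_Cbinom, CGamma_cn_add_s_1.
  assert (E2 : CGamma (Cplus (Cminus (Cplus (cn n) rho) (Cplus (cn k) s)) (RtoC 1)) =
               Cmult (poch bb (n - k)) (CGamma bb)).
  { rewrite <- CGamma_add_nat by auto. f_equal. unfold bb, cn. rewrite minus_INR by lia. rewrite RtoC_minus. ring. }
  assert (E3 : CGamma (Cplus (Cplus (cn n) rho) (RtoC 1)) = Cmult (poch R1 n) (CGamma R1)).
  { rewrite <- CGamma_add_nat by auto. f_equal. unfold R1, cn. ring. }
  rewrite E2, E3, poch_add_1_eq. unfold Kc.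
  assert (C1 := cn_add_neq_0 s k s_neq0 s_not_negint). assert (C2 := cn_add_2_neq_0 k).
  replace (Cplus s (RtoC (INR k))) with (Cplus (cn k) s) by (unfold cn; ring).
  field. repeat split; auto.
Qed.

Lemma moving_top_sum_poch : moving_top_sum n s rho =
  Cmult Kc (sumC (fun j => Cmult (Cmult (Cmult (nbinom n j) (poch s j))
                                        (poch (Cplus (Cplus s bb) (RtoC (INR j))) (n - j)))
                                 (alt_pair_coeff j)) (S n)).
Proof.
  assert (GR : CGamma R1 <> RtoC 0) by (apply CGamma_neq_0; auto).
  unfold moving_top_sum. rewrite csum_sumC, <- sumC_scal. apply sumC_ext. intros k Hk.
  unfold Cdiv. rewrite Cinv_mult, Cinv_Cbinom, CGamma_cn_add_s_1.
  assert (E2 : CGamma (Cplus (Cminus (Cplus (cn k) rho) (Cplus (cn k) s)) (RtoC 1)) = CGamma bb).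
  { f_equal. unfold bb. ring. }
  assert (E3 : CGamma (Cplus (Cplus (cn k) rho) (RtoC 1)) = Cmult (poch R1 k) (CGamma R1)).
  { rewrite <- CGamma_add_nat by auto. f_equal. unfold R1, cn. ring. }
  assert (E4 : poch R1 n = Cmult (poch R1 k) (poch (Cplus (Cplus s bb) (RtoC (INR k))) (n - k))).
  { replace n with (k + (n - k))%nat at 1 by lia. rewrite poch_add. f_equal. f_equal. unfold R1, bb. ring. }
  assert (PRk : poch R1 k <> RtoC 0) by (apply poch_neq_0; auto).
  assert (PRk2 : poch (Cplus (Cplus s bb) (RtoC (INR k))) (n - k) <> RtoC 0).
  { apply poch_neq_0. apply (nonpole_eq (Cplus R1 (RtoC (INR k)))). unfold R1, bb. ring. apply nonpole_add_nat; auto. }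
  rewrite E2, E3, poch_add_1_eq. unfold Kc, alt_pair_coeff, sgn. rewrite E4.
  assert (C1 := cn_add_neq_0 s k s_neq0 s_not_negint). assert (C2 := cn_add_2_neq_0 k).
  assert (C3 := cn_add_1_neq_0 k).
  replace (Cplus s (RtoC (INR k))) with (Cplus (cn k) s) by (unfold cn; ring).
  field. repeat split; auto.
Qed.

Lemma fixed_top_sum_eq_moving : fixed_top_sum n s rho = moving_top_sum n s rho.
Proof. rewrite fixed_top_sum_poch, moving_top_sum_poch. f_equal. apply poch_sum_identity. Qed.

End PochhammerForm.

Lemma is_derive_csum_inv_Cbinom n (w a b : nat -> C) r :
  (forall k, (k <= n)%nat -> nonpole (Cplus (b k) (RtoC 1)) /\
                              nonpole (Cplus (Cminus (Cplus (a k) r) (b k)) (RtoC 1)) /\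
                              nonpole (Cplus (Cplus (a k) r) (RtoC 1))) ->
  is_derive (K := C_AbsRing) (V := C_NormedModule)
    (fun y => csum n (fun k => Cmult (w k) (Cinv (Cbinom (Cplus (a k) y) (b k))))) r
    (csum n (fun k => Cmult (w k) (Cmult (Cinv (Cbinom (Cplus (a k) r) (b k)))
       (Cminus (digamma (Cplus (Cminus (Cplus (a k) r) (b k)) (RtoC 1)))
               (digamma (Cplus (Cplus (a k) r) (RtoC 1))))))).
Proof.
  intros H. apply is_derive_csum. intros k Hk. destruct (H k Hk) as [H1 [H2 H3]].
  eapply is_derive_eq.
  - exact (is_derive_Cmult _ _ r _ _ (is_derive_Cconst (w k) r) (is_derive_inv_Cbinom (a k) (b k) r H1 H2 H3)).
  - cbv beta. match goal with |- ?x = ?y => change (@eq C x y) end. ring.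
Qed.

Section Derivatives.

Variables (n : nat) (r s : C).
Hypothesis r_not_negint : ~ negint r.
Hypothesis s_not_negint : ~ negint s.
Hypothesis r_s_not_negint : ~ negint (Cminus r s).

Lemma nonpole_cn_add k t : ~ negint t -> nonpole (Cplus (Cplus (cn k) t) (RtoC 1)).
Proof.
  intros Ht. apply (nonpole_eq (Cplus (Cplus t (RtoC 1)) (RtoC (INR k)))). unfold cn; ring.
  apply nonpole_add_nat, nonpole_of_not_negint; auto.
Qed.

Lemma is_derive_fixed_top_sum :
  is_derive (K := C_AbsRing) (V := C_NormedModule) (fixed_top_sum n s) r
  (Cminus
    (csum n (fun k =>
       Cdiv (Cmult (nbinom n k) (Hc (Cminus (Cplus (cn (n - k)) r) s)))
            (Cmult (Cmult (Cplus (cn k) (RtoC 2)) (Cplus (cn k) s))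
                   (Cbinom (Cplus (cn n) r) (Cplus (cn k) s)))))
    (Cmult (Hc (Cplus (cn n) r))
       (csum n (fun k =>
          Cdiv (nbinom n k)
               (Cmult (Cmult (Cplus (cn k) (RtoC 2)) (Cplus (cn k) s))
                      (Cbinom (Cplus (cn n) r) (Cplus (cn k) s))))))).
Proof.
  set (w := fun k => Cmult (nbinom n k) (Cinv (Cmult (Cplus (cn k) (RtoC 2)) (Cplus (cn k) s)))).
  apply (is_derive_ext (fun y => csum n (fun k => Cmult (w k) (Cinv (Cbinom (Cplus (cn n) y) (Cplus (cn k) s)))))).
  { intros t. apply csum_ext. intros k _. unfold w, Cdiv. rewrite !Cinv_mult. ring. }
  eapply is_derive_eq.
  - apply (is_derive_csum_inv_Cbinom n w (fun _ => cn n) (fun k => Cplus (cn k) s)).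
    intros k Hk. split; [|split].
    + apply nonpole_cn_add; auto.
    + apply (nonpole_eq (Cplus (Cplus (Cminus r s) (RtoC 1)) (RtoC (INR (n - k))))).
      unfold cn. rewrite minus_INR, RtoC_minus by lia. ring.
      apply nonpole_add_nat, nonpole_of_not_negint; auto.
    + apply nonpole_cn_add; auto.
  - rewrite <- csum_scal, <- csum_minus. apply csum_ext. intros k Hk. unfold w, Hc, Cdiv.
    replace (Cplus (Cminus (Cplus (cn (n - k)) r) s) (RtoC 1))
      with (Cplus (Cminus (Cplus (cn n) r) (Cplus (cn k) s)) (RtoC 1))
      by (unfold cn; rewrite minus_INR, RtoC_minus by lia; ring).
    rewrite !Cinv_mult. ring.
Qed.

Lemma is_derive_moving_top_sum :
  is_derive (K := C_AbsRing) (V := C_NormedModule) (moving_top_sum n s) r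
  (Cminus
    (Cmult (Hc (Cminus r s))
       (csum n (fun k =>
          Cdiv (Cmult (nbinom n k) (sgn k))
               (Cmult (Cmult (Cmult (Cplus (cn k) (RtoC 1)) (Cplus (cn k) (RtoC 2)))
                             (Cplus (cn k) s))
                      (Cbinom (Cplus (cn k) r) (Cplus (cn k) s))))))
    (csum n (fun k =>
       Cdiv (Cmult (Cmult (nbinom n k) (sgn k)) (Hc (Cplus (cn k) r)))
            (Cmult (Cmult (Cmult (Cplus (cn k) (RtoC 1)) (Cplus (cn k) (RtoC 2)))
                          (Cplus (cn k) s))
                   (Cbinom (Cplus (cn k) r) (Cplus (cn k) s)))))).
Proof.
  set (w := fun k => Cmult (Cmult (nbinom n k) (sgn k))
                           (Cinv (Cmult (Cmult (Cplus (cn k) (RtoC 1)) (Cplus (cn k) (RtoC 2))) (Cplus (cn k) s)))).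
  apply (is_derive_ext (fun y => csum n (fun k => Cmult (w k) (Cinv (Cbinom (Cplus (cn k) y) (Cplus (cn k) s)))))).
  { intros t. apply csum_ext. intros k _. unfold w, Cdiv. rewrite !Cinv_mult. ring. }
  eapply is_derive_eq.
  - apply (is_derive_csum_inv_Cbinom n w cn (fun k => Cplus (cn k) s)).
    intros k Hk. split; [|split].
    + apply nonpole_cn_add; auto.
    + apply (nonpole_eq (Cplus (Cminus r s) (RtoC 1))). ring. apply nonpole_of_not_negint; auto.
    + apply nonpole_cn_add; auto.
  - rewrite <- csum_scal, <- csum_minus. apply csum_ext. intros k Hk. unfold w, Hc, Cdiv.
    replace (Cplus (Cminus r s) (RtoC 1)) with (Cplus (Cminus (Cplus (cn k) r) (Cplus (cn k) s)) (RtoC 1)) by ring.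
    rewrite !Cinv_mult. ring.
Qed.

End Derivatives.

Lemma fixed_top_sum_eq_moving_near n r s :
  ~ negint r -> ~ negint s -> s <> RtoC 0 -> ~ negint (Cminus r s) ->
  exists d, 0 < d /\ forall y, Cmod (Cminus y r) < d -> fixed_top_sum n s y = moving_top_sum n s y.
Proof.
  intros Hr Hs Hs0 Hrs.
  destruct (nonpole_dist_bound _ (nonpole_of_not_negint r Hr)) as [m1 [Hm1 Hb1]].
  destruct (nonpole_dist_bound _ (nonpole_of_not_negint _ Hrs)) as [m2 [Hm2 Hb2]].
  exists (Rmin m1 m2). split. apply Rmin_pos; auto.
  intros y Hy. apply fixed_top_sum_eq_moving; auto.
  - apply (nonpole_eq (Cplus (Cplus r (RtoC 1)) (Cminus y r))). ring.
    apply (nonpole_near _ m1); auto. eapply Rlt_le_trans. apply Hy. apply Rmin_l.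
  - apply (nonpole_eq (Cplus (Cplus (Cminus r s) (RtoC 1)) (Cminus y r))). ring.
    apply (nonpole_near _ m2); auto. eapply Rlt_le_trans. apply Hy. apply Rmin_r.
Qed.

Lemma is_derive_unique_of_locally_eq (f g : C -> C) x df dg :
  (exists d, 0 < d /\ forall y, Cmod (Cminus y x) < d -> f y = g y) ->
  is_derive (K := C_AbsRing) (V := C_NormedModule) f x df ->
  is_derive (K := C_AbsRing) (V := C_NormedModule) g x dg -> df = dg.
Proof.
  intros [d [Hd Hloc]] Hf Hg.
  assert (Hg' : is_derive (K := C_AbsRing) (V := C_NormedModule) g x df).
  { apply (filterdiff_ext_loc (K:=C_AbsRing) (U:=AbsRing_NormedModule C_AbsRing) (V:=C_NormedModule) f).
    - exists (mkposreal _ Hd). intros y Hy. apply Hloc. exact Hy.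
    - intros x0 Hx0.
      apply (is_filter_lim_locally_unique (K:=C_AbsRing) (V:=AbsRing_NormedModule C_AbsRing)) in Hx0. subst x0.
      apply Hloc. replace (Cminus x x) with (RtoC 0) by ring. rewrite Cmod_0. auto.
    - exact Hf. }
  rewrite <- (is_C_derive_unique _ _ _ Hg'). apply is_C_derive_unique. exact Hg.
Qed.

Theorem theorem22 (n : nat) (r s : C) :
  ~ negint r -> ~ negint s -> s <> RtoC 0 -> ~ negint (Cminus r s) ->
  Cminus
    (csum n (fun k =>
       Cdiv (Cmult (nbinom n k) (Hc (Cminus (Cplus (cn (n - k)) r) s)))
            (Cmult (Cmult (Cplus (cn k) (RtoC 2)) (Cplus (cn k) s))
                   (Cbinom (Cplus (cn n) r) (Cplus (cn k) s)))))
    (Cmult (Hc (Cplus (cn n) r))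
       (csum n (fun k =>
          Cdiv (nbinom n k)
               (Cmult (Cmult (Cplus (cn k) (RtoC 2)) (Cplus (cn k) s))
                      (Cbinom (Cplus (cn n) r) (Cplus (cn k) s))))))
  =
  Cminus
    (Cmult (Hc (Cminus r s))
       (csum n (fun k =>
          Cdiv (Cmult (nbinom n k) (sgn k))
               (Cmult (Cmult (Cmult (Cplus (cn k) (RtoC 1)) (Cplus (cn k) (RtoC 2)))
                             (Cplus (cn k) s))
                      (Cbinom (Cplus (cn k) r) (Cplus (cn k) s))))))
    (csum n (fun k =>
       Cdiv (Cmult (Cmult (nbinom n k) (sgn k)) (Hc (Cplus (cn k) r)))
            (Cmult (Cmult (Cmult (Cplus (cn k) (RtoC 1)) (Cplus (cn k) (RtoC 2)))
                          (Cplus (cn k) s))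
                   (Cbinom (Cplus (cn k) r) (Cplus (cn k) s))))).
Proof.
  intros Hr Hs Hs0 Hrs.
  apply (is_derive_unique_of_locally_eq (fixed_top_sum n s) (moving_top_sum n s) r).
  - apply fixed_top_sum_eq_moving_near; auto.
  - apply is_derive_fixed_top_sum; auto.
  - apply is_derive_moving_top_sum; auto.
Qed.
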